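(* Let $X$ be a Polish space with a fixed compatible metric $d$, $h:X\to\mathbb R$, $M\ge0$, $\kappa$ a countable ordinal, $P$ a closed subset of $X$, and $x\in h_M^\kappa(P)$. Then for every $\varepsilon>0$ there is a compact set $F\subseteq B(x,\varepsilon)$, homeomorphic to the ordinal interval $[1,\omega^\kappa]$ with the order topology, such that $|h(u)|>M$ for all $u\in F\setminus\{x\}$ and $h_M^\kappa(F)=\{x\}=F^{(\kappa)}$.
   Context: $B(x,\varepsilon)$ is the open $d$-ball. $A'$ denotes the set of accumulation points of $A$ in $X$, and $A^{(\kappa)}$ its $\kappa$-th iterate (intersections at limits). For closed $P$, $h_M(P)=(P\cap\{|h|>M\})'$, with iterates $h_M^0(P)=P$, $h_M^{\alpha+1}(P)=h_M(h_M^\alpha(P))$, and $h_M^\alpha(P)=\bigcap_{\alpha'<\alpha}h_M^{\alpha'}(P)$ for limit $\alpha$. *)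

From Stdlib Require Import Reals List.
Open Scope R_scope.

Section Defs.
Context {X : Type} (d : X -> X -> R).

Definition is_metric : Prop :=
  (forall x y, 0 <= d x y) /\ (forall x y, d x y = 0 <-> x = y) /\
  (forall x y, d x y = d y x) /\ (forall x y z, d x z <= d x y + d y z).

Definition open_in (U : X -> Prop) : Prop :=
  forall x, U x -> exists e, 0 < e /\ forall y, d x y < e -> U y.

Definition cauchy (u : nat -> X) : Prop :=
  forall e, 0 < e -> exists N, forall m n, (N <= m)%nat -> (N <= n)%nat -> d (u m) (u n) < e.

Definition converges_to (u : nat -> X) (l : X) : Prop :=
  forall e, 0 < e -> exists N, forall n, (N <= n)%nat -> d (u n) l < e.

Definition complete : Prop :=
  forall u, cauchy u -> exists l, converges_to u l.

(** countable dense subset (enumerated, possibly with gaps, so X may be empty) *)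
Definition separable : Prop :=
  exists s : nat -> option X, forall x e, 0 < e ->
    exists n y, s n = Some y /\ d x y < e.

Definition compact_in (F : X -> Prop) : Prop :=
  forall (I : Type) (U : I -> X -> Prop),
    (forall i, open_in (U i)) -> (forall x, F x -> exists i, U i x) ->
    exists l : list I, forall x, F x -> exists i, In i l /\ U i x.

Definition ball (x : X) (e : R) : X -> Prop := fun y => d x y < e.

Definition acc (A : X -> Prop) : X -> Prop :=
  fun x => forall e, 0 < e -> exists y, A y /\ y <> x /\ d x y < e.

Definition hM (h : X -> R) (M : R) (P : X -> Prop) : X -> Prop :=
  acc (fun y => P y /\ M < Rabs (h y)).
End Defs.

Definition polish_with_metric {X : Type} (d : X -> X -> R) : Prop :=
  is_metric d /\ separable d /\
  exists d' : X -> X -> R, is_metric d' /\ complete d' /\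
    forall U, open_in d U <-> open_in d' U.

(** ---- Ordinals ----
   A countable ordinal kappa is given as the order type of a strict
   well-order (K, lt) on a countable type K.  Ordinals <= kappa are indexed by
   [option K]: [Some k] is the ordinal (order type of {j | lt j k}) and [None]
   is kappa itself. *)
Definition well_order {K : Type} (lt : K -> K -> Prop) : Prop :=
  well_founded lt /\ (forall a b c, lt a b -> lt b c -> lt a c) /\
  (forall a b, lt a b \/ a = b \/ lt b a).

Definition countable_type (K : Type) : Prop :=
  exists f : K -> nat, forall a b, f a = f b -> a = b.

Definition ltx {K : Type} (lt : K -> K -> Prop) (a b : option K) : Prop :=
  match a, b with
  | Some a, Some b => lt a b
  | Some _, None => True
  | None, _ => False
  end.

Definition is_zero_ord {K} (lt : K -> K -> Prop) (a : option K) : Prop :=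
  forall b, ~ ltx lt b a.
Definition succ_of {K} (lt : K -> K -> Prop) (b a : option K) : Prop :=
  ltx lt b a /\ forall c, ltx lt c a -> c = b \/ ltx lt c b.
Definition is_limit_ord {K} (lt : K -> K -> Prop) (a : option K) : Prop :=
  ~ is_zero_ord lt a /\ ~ (exists b, succ_of lt b a).

Definition is_iteration {X K : Type} (lt : K -> K -> Prop)
  (Phi : (X -> Prop) -> (X -> Prop)) (A : X -> Prop)
  (D : option K -> X -> Prop) : Prop :=
  forall a x, D a x <->
    ((is_zero_ord lt a /\ A x) \/
     (exists b, succ_of lt b a /\ Phi (D b) x) \/
     (is_limit_ord lt a /\ forall b, ltx lt b a -> D b x)).

Definition iterate {X K : Type} (lt : K -> K -> Prop)
  (Phi : (X -> Prop) -> (X -> Prop)) (A : X -> Prop) (a : option K) : X -> Prop :=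
  fun x => forall D, is_iteration lt Phi A D -> D a x.

(** ---- The ordinal interval [1, omega^kappa] ----
   omega^kappa is realised (Cantor normal form / ordinal exponentiation) as the
   finitely supported functions K -> nat ordered antilexicographically
   (compare at the lt-greatest index where they differ).  The interval
   [1, omega^kappa] consists of the nonzero such functions together with
   the top point omega^kappa itself ([None]). *)
Definition fin_supp {K} (f : K -> nat) : Prop :=
  exists l : list K, forall k, f k <> 0%nat -> In k l.

Definition cnf_lt {K} (lt : K -> K -> Prop) (f g : K -> nat) : Prop :=
  exists k, (f k < g k)%nat /\ forall j, lt k j -> f j = g j.

Definition CNFpos {K : Type} : Type :=
  { f : K -> nat | fin_supp f /\ exists k, f k <> 0%nat }.

Definition omega_pow_interval (K : Type) : Type := option (@CNFpos K).

Definition opi_lt {K} (lt : K -> K -> Prop) (p q : omega_pow_interval K) : Prop :=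
  match p, q with
  | Some f, Some g => cnf_lt lt (proj1_sig f) (proj1_sig g)
  | Some _, None => True
  | None, _ => False
  end.

Definition order_open {T : Type} (lt : T -> T -> Prop) (U : T -> Prop) : Prop :=
  forall y, U y -> exists lo hi : option T,
    (forall a, lo = Some a -> lt a y) /\ (forall b, hi = Some b -> lt y b) /\
    forall z, (forall a, lo = Some a -> lt a z) ->
              (forall b, hi = Some b -> lt z b) -> U z.

Definition sub_open {X : Type} (d : X -> X -> R) (F : X -> Prop)
  (V : {u : X | F u} -> Prop) : Prop :=
  forall u, V u -> exists e, 0 < e /\
    forall v, d (proj1_sig u) (proj1_sig v) < e -> V v.

Definition homeomorphic_to_omega_pow {X K : Type} (d : X -> X -> R)
  (lt : K -> K -> Prop) (F : X -> Prop) : Prop :=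
  exists (phi : {u : X | F u} -> omega_pow_interval K)
         (psi : omega_pow_interval K -> {u : X | F u}),
    (forall u, psi (phi u) = u) /\ (forall p, phi (psi p) = p) /\
    (forall U, order_open (opi_lt lt) U -> sub_open d F (fun u => U (phi u))) /\
    (forall V, sub_open d F V -> order_open (opi_lt lt) (fun p => V (psi p))).

From Stdlib Require Import Reals List Lra Lia Classical ClassicalEpsilon FunctionalExtensionality PropExtensionality ProofIrrelevance.
Open Scope R_scope.

(* By transfinite induction, every [x] in the [a]-th iterate of [h_M] on [P] is the top point
   of compact copies [F] of [1, omega^a] of arbitrarily small diameter, with [|h| > M] off [x]
   and with [a]-th derivative, relative to any set containing [{|h| > M}], equal to [{x}].
   For [a > 0] write [1, omega^a) as the ordered sum of copies of [1, omega^(gam n)] with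
   [gam n < a]: constantly [gam] if [a = gam + 1], and cofinal in [a] if [a] is a limit, which
   needs [a] countable.  Since [x] is an accumulation point of the [gam n]-th iterate inside
   [{|h| > M}], pick [x_n -> x] with [d(x, x_(n+1)) < d(x, x_n) / 2] and, inductively, copies
   [F_n] of [1, omega^(gam n)] around [x_n] lying in disjoint shells about [x]; then
   [{x} ∪ ⋃ F_n] is a copy of [1, omega^a].  A continuous bijection from a compact set onto
   [1, omega^kappa] is a homeomorphism. *)

Section Ordinals.
Context {K : Type} (lt : K -> K -> Prop) (Hwo : well_order lt).

Definition lex (a b : option K) := ltx lt a b \/ a = b.

Lemma wo_wf : well_founded lt. Proof. exact (proj1 Hwo). Qed.
Lemma wo_trans : forall a b c, lt a b -> lt b c -> lt a c.
Proof. exact (proj1 (proj2 Hwo)). Qed.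
Lemma wo_trich : forall a b, lt a b \/ a = b \/ lt b a.
Proof. exact (proj2 (proj2 Hwo)). Qed.
Lemma wo_irrefl : forall a, ~ lt a a.
Proof. intros a H. induction (wo_wf a) as [a _ IH]. exact (IH a H H). Qed.

Lemma ltx_wf : well_founded (ltx lt).
Proof.
  assert (HS : forall k, Acc (ltx lt) (Some k)).
  { intro k. induction (wo_wf k) as [k _ IH]. constructor. intros [j|] Hj; simpl in Hj.
    - apply IH; exact Hj.
    - destruct Hj. }
  intros [k|]. apply HS. constructor. intros [j|] Hj. apply HS. destruct Hj.
Qed.

Lemma ltx_trans : forall a b c, ltx lt a b -> ltx lt b c -> ltx lt a c.
Proof.
  intros [a|] [b|] [c|]; simpl; auto; try tauto. apply wo_trans.
Qed.

Lemma ltx_irrefl : forall a, ~ ltx lt a a.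
Proof. intros [a|]; simpl. apply wo_irrefl. auto. Qed.

Lemma ltx_trich : forall a b, ltx lt a b \/ a = b \/ ltx lt b a.
Proof.
  intros [a|] [b|]; simpl; auto.
  destruct (wo_trich a b) as [H|[H|H]]; subst; auto.
Qed.

Lemma ltx_asym : forall a b, ltx lt a b -> ~ ltx lt b a.
Proof. intros a b H1 H2. apply (ltx_irrefl a). eapply ltx_trans; eauto. Qed.

Lemma lex_ltx_trans : forall a b c, lex a b -> ltx lt b c -> ltx lt a c.
Proof. intros a b c [H|H] H'; subst; auto. eapply ltx_trans; eauto. Qed.
Lemma ltx_lex_trans : forall a b c, ltx lt a b -> lex b c -> ltx lt a c.
Proof. intros a b c H [H'|H']; subst; auto. eapply ltx_trans; eauto. Qed.
Lemma not_ltx_lex : forall a b, ~ ltx lt b a -> lex a b.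
Proof. intros a b H. destruct (ltx_trich a b) as [H1|[H1|H1]]; unfold lex; tauto. Qed.
Lemma lex_not_ltx : forall a b, lex a b -> ~ ltx lt b a.
Proof. intros a b [H|H] H'; subst. eapply ltx_asym; eauto. eapply ltx_irrefl; eauto. Qed.

Lemma ltx_min_exists : forall Q : option K -> Prop, (exists a, Q a) ->
  exists m, Q m /\ forall b, Q b -> lex m b.
Proof.
  intros Q [a Ha]. induction (ltx_wf a) as [a _ IH].
  destruct (classic (exists b, Q b /\ ltx lt b a)) as [[b [Hb Hba]]|Hn].
  - exact (IH b Hba Hb).
  - exists a. split; auto. intros b Hb. apply not_ltx_lex. intro H. apply Hn; eauto.
Qed.

Lemma zero_lex : forall a b, is_zero_ord lt a -> lex a b.
Proof. intros a b H. apply not_ltx_lex. apply H. Qed.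

Lemma limit_between : forall a b, is_limit_ord lt a -> ltx lt b a ->
  exists c, ltx lt b c /\ ltx lt c a.
Proof.
  intros a b [Hz Hs] Hba. apply NNPP. intro Hn. apply Hs. exists b. split; auto.
  intros c Hc. destruct (ltx_trich c b) as [H|[H|H]]; auto. exfalso; eauto.
Qed.

Lemma succ_exists : forall a b, ltx lt b a -> exists c, succ_of lt b c /\ lex c a.
Proof.
  intros a b Hba. destruct (ltx_min_exists (fun c => ltx lt b c)) as [c [Hc Hmin]]; eauto.
  exists c. split; [split; auto|].
  - intros c' Hc'. destruct (ltx_trich c' b) as [H|[H|H]]; auto.
    exfalso. specialize (Hmin c' H). eapply lex_not_ltx; eauto.
  - apply Hmin; auto.
Qed.

Lemma succ_lex : forall b c a, succ_of lt b c -> ltx lt b a -> lex c a.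
Proof.
  intros b c a [Hbc Hm] Hba. apply not_ltx_lex. intro H.
  destruct (Hm a H) as [E|E]. subst. eapply ltx_irrefl; eauto.
  eapply ltx_asym; eauto.
Qed.

Lemma succ_pred_unique : forall b b' a, succ_of lt b a -> succ_of lt b' a -> b = b'.
Proof.
  intros b b' a [H1 H2] [H3 H4]. destruct (H2 b' H3) as [E|E]; auto.
  destruct (H4 b H1) as [E'|E']; auto. exfalso; eapply ltx_asym; eauto.
Qed.

Lemma succ_not_zero : forall b a, succ_of lt b a -> ~ is_zero_ord lt a.
Proof. intros b a [H _] Hz. exact (Hz b H). Qed.

Lemma ord_cases : forall a, is_zero_ord lt a \/ (exists b, succ_of lt b a) \/ is_limit_ord lt a.
Proof.
  intro a. destruct (classic (is_zero_ord lt a)); auto.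
  destruct (classic (exists b, succ_of lt b a)); auto. right; right; split; auto.
Qed.

Section Iter.
Context {X : Type} (Phi : (X -> Prop) -> (X -> Prop)) (A : X -> Prop).

Definition iter_step (a : option K) (rec : forall b, ltx lt b a -> X -> Prop) : X -> Prop :=
  fun x => (is_zero_ord lt a /\ A x) \/
           (exists b (H : ltx lt b a), succ_of lt b a /\ Phi (rec b H) x) \/
           (is_limit_ord lt a /\ forall b (H : ltx lt b a), rec b H x).

Definition iter_fix : option K -> X -> Prop := Fix ltx_wf (fun _ => X -> Prop) iter_step.

Lemma iter_fix_eq : forall a, iter_fix a = iter_step a (fun b _ => iter_fix b).
Proof.
  intro a. unfold iter_fix. rewrite Fix_eq. reflexivity.
  intros a' f g Hfg. assert (E : f = g).
  { apply functional_extensionality_dep; intro b. apply functional_extensionality_dep; intro H.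
    apply Hfg. }
  subst; reflexivity.
Qed.

Lemma iter_fix_is_iteration : is_iteration lt Phi A iter_fix.
Proof.
  intros a x. rewrite iter_fix_eq. unfold iter_step. split.
  - intros [H|[[b [Hb H]]|H]]; [left; auto|right; left; exists b; auto|right; right; auto].
  - intros [H|[[b H]|H]]; [left; auto| |right; right; auto]. right; left. exists b, (proj1 (proj1 H)). auto.
Qed.

Lemma iteration_unique : forall D1 D2, is_iteration lt Phi A D1 -> is_iteration lt Phi A D2 ->
  forall a x, D1 a x <-> D2 a x.
Proof.
  intros D1 D2 H1 H2 a. induction (ltx_wf a) as [a _ IH].
  assert (E : forall b, ltx lt b a -> D1 b = D2 b).
  { intros b Hb. apply functional_extensionality; intro y. apply propositional_extensionality.
    apply IH; auto. }
  intro x. rewrite (H1 a x), (H2 a x). split.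
  - intros [H|[[b [Hs H]]|[Hl H]]]; auto.
    + right; left. exists b. split; auto. rewrite <- (E b (proj1 Hs)); auto.
    + right; right. split; auto. intros b Hb. apply IH; auto.
  - intros [H|[[b [Hs H]]|[Hl H]]]; auto.
    + right; left. exists b. split; auto. rewrite (E b (proj1 Hs)); auto.
    + right; right. split; auto. intros b Hb. apply IH; auto.
Qed.

Lemma iterate_iter_fix : forall a x, iterate lt Phi A a x <-> iter_fix a x.
Proof.
  intros a x. split.
  - intro H. apply H. apply iter_fix_is_iteration.
  - intros H D HD. apply (iteration_unique iter_fix D iter_fix_is_iteration HD). auto.
Qed.

Lemma iterate_eq_iter_fix : iterate lt Phi A = iter_fix.
Proof.
  apply functional_extensionality; intro a. apply functional_extensionality; intro x.
  apply propositional_extensionality. apply iterate_iter_fix.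
Qed.

Lemma iterate_is_iteration : is_iteration lt Phi A (iterate lt Phi A).
Proof. rewrite iterate_eq_iter_fix. apply iter_fix_is_iteration. Qed.

Lemma iterate_zero : forall a x, is_zero_ord lt a -> (iterate lt Phi A a x <-> A x).
Proof.
  intros a x Hz. rewrite (iterate_is_iteration a x). split.
  - intros [H|[[b [Hs _]]|[Hl _]]]. tauto. exfalso; eapply succ_not_zero; eauto. exfalso; apply (proj1 Hl); auto.
  - auto.
Qed.

Lemma iterate_succ : forall b a x, succ_of lt b a ->
  (iterate lt Phi A a x <-> Phi (iterate lt Phi A b) x).
Proof.
  intros b a x Hs. rewrite (iterate_is_iteration a x). split.
  - intros [H|[[b' [Hs' H]]|[Hl _]]].
    + exfalso; eapply succ_not_zero; eauto. apply H.
    + rewrite (succ_pred_unique b b' a Hs Hs'). auto.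
    + exfalso. apply (proj2 Hl). eauto.
  - intro H. right; left. eauto.
Qed.

Lemma iterate_limit : forall a x, is_limit_ord lt a ->
  (iterate lt Phi A a x <-> forall b, ltx lt b a -> iterate lt Phi A b x).
Proof.
  intros a x Hl. rewrite (iterate_is_iteration a x). split.
  - intros [H|[[b' [Hs' H]]|[_ H]]]; auto.
    + exfalso; apply (proj1 Hl); apply H.
    + exfalso. apply (proj2 Hl). eauto.
  - intro H. right; right. auto.
Qed.
End Iter.

Lemma iterate_ext : forall {X} (Phi1 Phi2 : (X -> Prop) -> X -> Prop) A,
  (forall S y, Phi1 S y <-> Phi2 S y) -> forall a y,
  (iterate lt Phi1 A a y <-> iterate lt Phi2 A a y).
Proof.
  intros X Phi1 Phi2 A HP.
  assert (T : forall P1 P2 : (X -> Prop) -> X -> Prop, (forall S y, P1 S y <-> P2 S y) ->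
    forall D, is_iteration lt P1 A D -> is_iteration lt P2 A D).
  { intros P1 P2 HP12 D HD b z. rewrite (HD b z). split.
    - intros [Q|[[c Q]|Q]]; [left; auto| right; left; exists c; split; [apply Q|apply HP12; apply Q]| right; right; auto].
    - intros [Q|[[c Q]|Q]]; [left; auto| right; left; exists c; split; [apply Q|apply HP12; apply Q]| right; right; auto]. }
  intros a y. split; intros H D HD; apply H.
  - apply (T Phi2 Phi1); auto. intros; symmetry; auto.
  - apply (T Phi1 Phi2); auto.
Qed.
End Ordinals.

Open Scope nat_scope.

Section CantorNormalForm.
Context {K : Type} (lt : K -> K -> Prop) (Hwo : well_order lt).

Notation Opi := (omega_pow_interval K).
Let ltT := wo_trich lt Hwo.
Let ltI := wo_irrefl lt Hwo.
Let ltTr := wo_trans lt Hwo.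
Definition olt : Opi -> Opi -> Prop := opi_lt lt.
Definition ole (p q : Opi) := olt p q \/ p = q.

Lemma list_max_exists (Q : K -> Prop) (l : list K) : (exists k, Q k /\ In k l) ->
  exists m, Q m /\ In m l /\ forall j, Q j -> In j l -> j = m \/ lt j m.
Proof.
  induction l as [|a l IH]; intros [k [Hk Hin]]. destruct Hin.
  destruct (classic (exists k, Q k /\ In k l)) as [Hex|Hn].
  - destruct (IH Hex) as [m [Hm [Hml Hmax]]].
    destruct (classic (Q a /\ lt m a)) as [[Qa Hma]|Hna].
    + exists a. split; auto. split; [left; auto|]. intros j Hj [E|Ej]; auto.
      destruct (Hmax j Hj Ej) as [E|E]; subst; auto. right; eapply ltTr; eauto.
    + exists m. split; auto. split; [right; auto|]. intros j Hj [E|Ej]; auto.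
      subst j. destruct (ltT a m) as [H|[H|H]]; auto. tauto.
  - exists a. destruct Hin as [E|E]. subst; split; auto. split; [left; auto|].
    intros j Hj [E|Ej]; auto. exfalso; eauto.
    exfalso; eauto.
Qed.

Lemma cnf_irrefl : forall f, ~ cnf_lt lt f f.
Proof. intros f [k [H _]]. lia. Qed.

Lemma cnf_trans : forall f g h, cnf_lt lt f g -> cnf_lt lt g h -> cnf_lt lt f h.
Proof.
  intros f g h [k1 [H1 E1]] [k2 [H2 E2]].
  destruct (ltT k1 k2) as [H|[H|H]].
  - exists k2. rewrite E1; auto. split; auto. intros j Hj. rewrite E1, E2; auto.
    eapply ltTr; eauto.
  - subst. exists k2. split. lia. intros j Hj. rewrite E1, E2; auto.
  - exists k1. rewrite <- E2; auto. split; auto. intros j Hj. rewrite E1, E2; auto.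
    eapply ltTr; eauto.
Qed.

Lemma cnf_trich : forall f g, fin_supp f -> fin_supp g ->
  (forall k, f k = g k) \/ cnf_lt lt f g \/ cnf_lt lt g f.
Proof.
  intros f g [lf Hf] [lg Hg].
  destruct (classic (forall k, f k = g k)) as [E|Hn]; auto. right.
  apply not_all_ex_not in Hn. destruct Hn as [k Hk].
  destruct (list_max_exists (fun k => f k <> g k) (lf ++ lg)) as [m [Hm [_ Hmax]]].
  { exists k. split; auto. apply in_or_app. destruct (Nat.eq_dec (f k) 0).
    right; apply Hg; lia. left; apply Hf; lia. }
  assert (Ab : forall j, lt m j -> f j = g j).
  { intros j Hj. apply NNPP. intro Hne. destruct (Hmax j Hne) as [E|E].
    - apply in_or_app. destruct (Nat.eq_dec (f j) 0). right; apply Hg; lia. left; apply Hf; lia.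
    - subst; eapply ltI; eauto.
    - eapply ltI. eapply ltTr; eauto. }
  destruct (Nat.lt_gt_cases (f m) (g m)) as [[H|H] _]; auto.
  - left. exists m. auto.
  - right. exists m. split; auto. intros j Hj; symmetry; auto.
Qed.

Lemma cnf_ext : forall f f' g g', (forall k, f k = f' k) -> (forall k, g k = g' k) ->
  cnf_lt lt f g -> cnf_lt lt f' g'.
Proof.
  intros f f' g g' Ef Eg [k [H1 H2]]. exists k. rewrite <- Ef, <- Eg. split; auto.
  intros j Hj. rewrite <- Ef, <- Eg; auto.
Qed.

Definition cnf_add (f c : K -> nat) : K -> nat := fun i => f i + c i.

Lemma fin_supp_add : forall f c, fin_supp f -> fin_supp c -> fin_supp (cnf_add f c).
Proof.
  intros f c [l1 H1] [l2 H2]. exists (l1 ++ l2). intros k Hk. unfold cnf_add in Hk.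
  apply in_or_app. destruct (Nat.eq_dec (f k) 0). right; apply H2; lia. left; apply H1; lia.
Qed.

Lemma cnf_lt_add2r : forall f g c, cnf_lt lt f g <-> cnf_lt lt (cnf_add f c) (cnf_add g c).
Proof.
  intros f g c; unfold cnf_add; split; intros [k [H1 H2]]; exists k; split; try lia;
  intros j Hj; specialize (H2 j Hj); lia.
Qed.

Lemma cnf_lt_addr : forall f c, fin_supp f -> fin_supp c -> (exists k, c k <> 0) ->
  cnf_lt lt f (cnf_add f c).
Proof.
  intros f c Hf Hc [k Hk]. destruct (cnf_trich f (cnf_add f c) Hf (fin_supp_add f c Hf Hc)) as [E|[H|H]]; auto.
  - specialize (E k); unfold cnf_add in E; lia.
  - destruct H as [j [Hj _]]. unfold cnf_add in Hj. lia.
Qed.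

Lemma cnfpos_eq : forall f g : @CNFpos K, (forall k, proj1_sig f k = proj1_sig g k) -> f = g.
Proof.
  intros [f Hf] [g Hg] E; simpl in E.
  assert (f = g) by (apply functional_extensionality; auto). subst.
  f_equal. apply proof_irrelevance.
Qed.

Lemma some_cnfpos_eq : forall f g : @CNFpos K, (forall k, proj1_sig f k = proj1_sig g k) -> Some f = Some g.
Proof. intros; f_equal; apply cnfpos_eq; auto. Qed.

Lemma cnfpos_fin_supp (f : @CNFpos K) : fin_supp (proj1_sig f).
Proof. exact (proj1 (proj2_sig f)). Qed.
Lemma cnfpos_nonzero (f : @CNFpos K) : exists k, proj1_sig f k <> 0.
Proof. exact (proj2 (proj2_sig f)). Qed.

Lemma olt_irrefl : forall p, ~ olt p p.
Proof. intros [f|]; simpl; auto. apply cnf_irrefl. Qed.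

Lemma olt_trans : forall p q r, olt p q -> olt q r -> olt p r.
Proof.
  intros [f|] [g|] [h|]; simpl; auto; try tauto. apply cnf_trans.
Qed.

Lemma olt_trich : forall p q, olt p q \/ p = q \/ olt q p.
Proof.
  intros [f|] [g|]; simpl; auto.
  destruct (cnf_trich (proj1_sig f) (proj1_sig g) (cnfpos_fin_supp f) (cnfpos_fin_supp g)) as [E|[H|H]]; auto.
  right; left. apply some_cnfpos_eq; auto.
Qed.

Lemma olt_asym : forall p q, olt p q -> ~ olt q p.
Proof. intros p q H1 H2. apply (olt_irrefl p). eapply olt_trans; eauto. Qed.
Lemma ole_olt_trans : forall p q r, ole p q -> olt q r -> olt p r.
Proof. intros p q r [H|H] H'; subst; auto. eapply olt_trans; eauto. Qed.
Lemma olt_ole_trans : forall p q r, olt p q -> ole q r -> olt p r.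
Proof. intros p q r H [H'|H']; subst; auto. eapply olt_trans; eauto. Qed.
Lemma ole_trans : forall p q r, ole p q -> ole q r -> ole p r.
Proof. intros p q r [H|H] H'; subst; auto. left. eapply olt_ole_trans; eauto. Qed.
Lemma ole_not_olt : forall p q, ole p q -> ~ olt q p.
Proof. intros p q [H|H] H'; subst. eapply olt_asym; eauto. eapply olt_irrefl; eauto. Qed.

Definition uvec (j : K) : K -> nat := fun i => if excluded_middle_informative (i = j) then 1 else 0.
Lemma uvec_self : forall j, uvec j j = 1.
Proof. intro j; unfold uvec; destruct (excluded_middle_informative (j = j)); tauto. Qed.
Lemma uvec_other : forall j i, i <> j -> uvec j i = 0.
Proof. intros j i H; unfold uvec; destruct (excluded_middle_informative (i = j)); tauto. Qed.
Lemma fin_supp_uvec : forall j, fin_supp (uvec j).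
Proof.
  intro j. exists (j :: nil). intros k Hk. left. destruct (excluded_middle_informative (k = j)); auto.
  rewrite uvec_other in Hk; auto. lia.
Qed.
Lemma fin_supp_scale : forall n (f : K -> nat), fin_supp f -> fin_supp (fun i => n * f i).
Proof. intros n f [l H]. exists l. intros k Hk. apply H. intro E; rewrite E in Hk; lia. Qed.

Definition uvec_cnf (j : K) : @CNFpos K.
Proof. exists (uvec j). split. apply fin_supp_uvec. exists j. rewrite uvec_self; lia. Defined.

Definition cnf_shift (c : K -> nat) (Hc : fin_supp c) (g : @CNFpos K) : @CNFpos K.
Proof.
  exists (cnf_add (proj1_sig g) c). split. apply fin_supp_add; auto. apply cnfpos_fin_supp.
  destruct (cnfpos_nonzero g) as [k Hk]. exists k. unfold cnf_add. lia.
Defined.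

Definition omega_pow (a : option K) : Opi := match a with None => None | Some j => Some (uvec_cnf j) end.

Definition supp_below (j : K) (f : K -> nat) := forall i, f i <> 0 -> lt i j.

Definition le_uvec (j : K) (f : K -> nat) := (forall i, f i = uvec j i) \/ supp_below j f.

(* [pow_ival a] is the subinterval [1, omega^a] of [1, omega^kappa]. *)
Definition pow_ival (a : option K) (p : Opi) : Prop :=
  match a with
  | None => True
  | Some j => exists g, p = Some g /\ le_uvec j (proj1_sig g)
  end.

Lemma cnf_lt_uvec : forall j f, supp_below j f -> cnf_lt lt f (uvec j).
Proof.
  intros j f H. exists j. split.
  - rewrite uvec_self. destruct (Nat.eq_dec (f j) 0). lia. exfalso; apply (ltI j); auto.
  - intros i Hi. rewrite uvec_other. destruct (Nat.eq_dec (f i) 0); auto. exfalso.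
    apply (ltI i). eapply ltTr; eauto. intro E; subst; eapply ltI; eauto.
Qed.

Lemma pow_ival_top : forall a, pow_ival a (omega_pow a).
Proof. intros [j|]; simpl; auto. exists (uvec_cnf j). split; auto. left; auto. Qed.

Lemma pow_ival_le : forall a p, pow_ival a p -> ole p (omega_pow a).
Proof.
  intros [j|] p H; simpl in *.
  - destruct H as [g [E [H|H]]]; subst.
    + right. apply some_cnfpos_eq. auto.
    + left. simpl. apply cnf_lt_uvec; auto.
  - destruct p; [left; simpl; auto | right; auto].
Qed.

Lemma supp_below_of_cnf_lt_uvec : forall j f, cnf_lt lt f (uvec j) -> supp_below j f.
Proof.
  intros j f [k [H1 H2]] i Hi.
  assert (k = j). { apply NNPP; intro; rewrite uvec_other in H1; auto; lia. } subst k.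
  destruct (ltT i j) as [H|[H|H]]; auto.
  - subst. rewrite uvec_self in H1. lia.
  - rewrite H2, uvec_other in Hi; auto. lia. intro E; subst; eapply ltI; eauto.
Qed.

Lemma pow_ival_of_olt : forall a p, olt p (omega_pow a) -> pow_ival a p /\ p <> omega_pow a.
Proof.
  intros a p H. split.
  - destruct a as [j|]; simpl; auto. destruct p as [f|]; simpl in H; [|destruct H].
    exists f. split; auto. right. apply supp_below_of_cnf_lt_uvec; auto.
  - intro E; subst; eapply olt_irrefl; eauto.
Qed.

Lemma pow_ival_zero : forall a p, is_zero_ord lt a -> pow_ival a p -> p = omega_pow a.
Proof.
  intros a p Hz H. destruct a as [j|]; simpl in *.
  - destruct H as [g [E [H|H]]]; subst.
    + apply some_cnfpos_eq; auto.
    + exfalso. destruct (cnfpos_nonzero g) as [k Hk]. apply (Hz (Some k)). simpl. apply H; auto.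
  - destruct p as [g|]; auto. exfalso. destruct (cnfpos_nonzero g) as [k Hk]. apply (Hz (Some k)). simpl; auto.
Qed.

Lemma omega_pow_lt : forall a b, ltx lt a b -> olt (omega_pow a) (omega_pow b).
Proof.
  intros [i|] [j|] H; simpl in *; auto. apply cnf_lt_uvec. intros k Hk.
  destruct (excluded_middle_informative (k = i)). subst; auto. rewrite uvec_other in Hk; auto. lia.
Qed.

Lemma omega_pow_le : forall a b, lex lt a b -> ole (omega_pow a) (omega_pow b).
Proof. intros a b [H|H]. left; apply omega_pow_lt; auto. right; subst; auto. Qed.

(* [1, omega^a) as the ordered sum over [n] of the copies [io n [1, omega^(gam n)]],
   with [gam] cofinal below [a]. *)
Record pow_decomp (a : option K) (gam : nat -> option K) (io : nat -> Opi -> Opi) : Prop := {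
  pd_lt : forall n, ltx lt (gam n) a;
  pd_cofinal : forall b, ltx lt b a -> exists N, forall n, N <= n -> lex lt b (gam n);
  pd_mono : forall n p q, pow_ival (gam n) p -> pow_ival (gam n) q -> olt p q -> olt (io n p) (io n q);
  pd_below : forall n p, pow_ival (gam n) p -> olt (io n p) (omega_pow a);
  pd_ordered : forall m n p q, m < n -> pow_ival (gam m) p -> pow_ival (gam n) q -> olt (io m p) (io n q);
  pd_onto : forall r, olt r (omega_pow a) -> exists n p, pow_ival (gam n) p /\ io n p = r
}.

End CantorNormalForm.
Section SuccBlocks.
Context {K : Type} (lt : K -> K -> Prop) (Hwo : well_order lt).
Notation Opi := (omega_pow_interval K).
Let ltI := wo_irrefl lt Hwo.
Let ltTr := wo_trans lt Hwo.
Notation olt := (olt lt).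
Notation pow_ival := (pow_ival lt).
Notation le_uvec := (le_uvec lt).

Lemma pow_ival_some : forall j p, pow_ival (Some j) p -> exists g, p = Some g /\ le_uvec j (proj1_sig g).
Proof. intros j p H; exact H. Qed.

Definition supp_le (j : K) (f : K -> nat) := forall i, f i <> 0 -> i = j \/ lt i j.

Lemma olt_omega_pow_succ : forall j a (f : @CNFpos K), succ_of lt (Some j) a ->
  supp_le j (proj1_sig f) -> olt (Some f) (omega_pow a).
Proof.
  intros j [k|] f Hs HL; simpl; auto. apply cnf_lt_uvec; auto. intros i Hi.
  destruct Hs as [Hjk _]. simpl in Hjk. destruct (HL i Hi) as [E|E]. subst; auto. eapply ltTr; eauto.
Qed.

Lemma supp_le_of_olt_omega_pow : forall j a (f : @CNFpos K), succ_of lt (Some j) a ->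
  olt (Some f) (omega_pow a) -> supp_le j (proj1_sig f).
Proof.
  intros j [k|] f [Hjk Hm] H i Hi; simpl in *.
  - apply supp_below_of_cnf_lt_uvec in H; auto. specialize (Hm (Some i) (H i Hi)). simpl in Hm.
    destruct Hm as [E|E]. inversion E; auto. auto.
  - specialize (Hm (Some i) I). simpl in Hm. destruct Hm as [E|E]. inversion E; auto. auto.
Qed.

Lemma le_uvec_supp_le : forall j f, le_uvec j f -> supp_le j f.
Proof.
  intros j f [H|H] i Hi.
  - rewrite H in Hi. left. apply NNPP; intro; rewrite uvec_other in Hi; auto.
  - right; auto.
Qed.

Lemma le_uvec_vanish_above : forall j f, le_uvec j f -> forall i, lt j i -> f i = 0.
Proof.
  intros j f H i Hi. destruct (Nat.eq_dec (f i) 0) as [|Hn]; auto.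
  destruct (le_uvec_supp_le j f H i Hn) as [E|E]. subst; exfalso; eapply ltI; eauto.
  exfalso; eapply ltI; eapply ltTr; eauto.
Qed.

Lemma le_uvec_cases : forall j f, le_uvec j f ->
  (f j = 1 /\ forall i, f i = uvec j i) \/ (f j = 0 /\ supp_below lt j f).
Proof.
  intros j f [H|H].
  - left. rewrite H, uvec_self. auto.
  - right. split; auto. destruct (Nat.eq_dec (f j) 0); auto. exfalso; apply (ltI j); auto.
Qed.

(* [succ_block j n p = omega^j * n + p]; for [p] in [1, omega^j] these blocks tile [1, omega^(j+1)). *)
Definition succ_block (j : K) (n : nat) (p : Opi) : Opi :=
  match p with
  | Some g => Some (cnf_shift (fun i => n * uvec j i) (fin_supp_scale n _ (fin_supp_uvec j)) g)
  | None => None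
  end.

Lemma succ_block_mono : forall j n p q, pow_ival (Some j) p -> pow_ival (Some j) q ->
  olt p q -> olt (succ_block j n p) (succ_block j n q).
Proof.
  intros j n p q Hp Hq Hpq. destruct (pow_ival_some _ _ Hp) as [g [-> _]].
  destruct (pow_ival_some _ _ Hq) as [g' [-> _]]. simpl in *. apply cnf_lt_add2r; auto.
Qed.

Section Succ.
Variables (j : K) (a : option K).
Hypothesis Hs : succ_of lt (Some j) a.

Lemma succ_block_below : forall n p, pow_ival (Some j) p -> olt (succ_block j n p) (omega_pow a).
Proof.
  intros n p Hp. destruct (pow_ival_some _ _ Hp) as [g [-> Hg]].
  apply (olt_omega_pow_succ j a); auto. intros i Hi. simpl in Hi. unfold cnf_add in Hi.
  destruct (Nat.eq_dec (proj1_sig g i) 0).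
  - left. apply NNPP; intro. rewrite uvec_other in Hi; auto. lia.
  - apply le_uvec_supp_le with (f := proj1_sig g); auto.
Qed.

Lemma succ_block_ordered : forall m n p q, m < n -> pow_ival (Some j) p -> pow_ival (Some j) q ->
  olt (succ_block j m p) (succ_block j n q).
Proof.
  intros m n p q Hmn Hp Hq. destruct (pow_ival_some _ _ Hp) as [g [-> Hg]].
  destruct (pow_ival_some _ _ Hq) as [g' [-> Hg']]. simpl. unfold cnf_add.
  destruct (Nat.lt_ge_cases (proj1_sig g j + m * uvec j j) (proj1_sig g' j + n * uvec j j)) as [Hl|Hl].
  - exists j. split; auto. intros i Hi.
    rewrite (le_uvec_vanish_above j _ Hg i Hi), (le_uvec_vanish_above j _ Hg' i Hi).
    rewrite uvec_other. lia. intro E; subst; eapply ltI; eauto.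
  - (* equality at [j] forces [p = omega^j], [q < omega^j] and [n = m + 1] *)
    rewrite uvec_self in Hl. destruct (le_uvec_cases j _ Hg) as [[G1 G2]|[G1 G2]]; [|lia].
    destruct (le_uvec_cases j _ Hg') as [[G1' G2']|[G1' G2']]; [lia|].
    assert (En : n = S m) by lia. subst n.
    apply cnf_ext with (f := fun i => proj1_sig g i + m * uvec j i)
       (g := cnf_add (fun i => proj1_sig g i + m * uvec j i) (proj1_sig g')).
    + auto.
    + intro k. unfold cnf_add. rewrite G2. lia.
    + apply (cnf_lt_addr lt Hwo).
      * apply fin_supp_add; [apply cnfpos_fin_supp|apply fin_supp_scale; apply fin_supp_uvec].
      * apply cnfpos_fin_supp.
      * apply cnfpos_nonzero.
Qed.

Lemma succ_block_onto : forall r, olt r (omega_pow a) ->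
  exists n p, pow_ival (Some j) p /\ succ_block j n p = r.
Proof.
  intros r Hr. destruct r as [f|]; [|destruct a; simpl in Hr; destruct Hr].
  assert (HL := supp_le_of_olt_omega_pow j a f Hs Hr).
  set (g := fun i => if excluded_middle_informative (i = j) then 0 else proj1_sig f i).
  destruct (classic (exists k, g k <> 0)) as [Hnz|Hz].
  - assert (Hg : fin_supp g /\ exists k, g k <> 0).
    { split; auto. destruct (cnfpos_fin_supp f) as [l Hl]. exists l. intros k Hk. apply Hl.
      unfold g in Hk. destruct (excluded_middle_informative (k = j)); try lia; auto. }
    exists (proj1_sig f j), (Some (exist _ g Hg)). split.
    + exists (exist _ g Hg). split; auto. right. intros i Hi. simpl in Hi.
      unfold g in Hi. destruct (excluded_middle_informative (i = j)). lia.
      destruct (HL i Hi) as [E|E]; tauto.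
    + simpl. apply some_cnfpos_eq. intro k. simpl. unfold cnf_add, g.
      destruct (excluded_middle_informative (k = j)). subst. rewrite uvec_self. lia.
      rewrite uvec_other; auto. lia.
  - assert (Hfj : proj1_sig f j <> 0).
    { destruct (cnfpos_nonzero f) as [k Hk]. intro E. apply Hz. exists k. unfold g.
      destruct (excluded_middle_informative (k = j)). subst; lia. auto. }
    exists (pred (proj1_sig f j)), (Some (uvec_cnf j)). split.
    + exists (uvec_cnf j). split; auto. left; auto.
    + simpl. apply some_cnfpos_eq. intro k. simpl. unfold cnf_add.
      destruct (excluded_middle_informative (k = j)). subst. rewrite uvec_self. lia.
      rewrite uvec_other; auto. destruct (Nat.eq_dec (proj1_sig f k) 0) as [E0|E0]; [lia|].
      exfalso. apply Hz. exists k. unfold g. destruct (excluded_middle_informative (k = j)); tauto.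
Qed.

Lemma pow_decomp_succ : pow_decomp lt a (fun _ => Some j) (succ_block j).
Proof.
  constructor.
  - intro n. apply Hs.
  - intros b Hb. exists 0. intros n _. destruct Hs as [_ Hm]. destruct (Hm b Hb) as [E|E].
    right; auto. left; auto.
  - intros n. apply succ_block_mono.
  - apply succ_block_below.
  - apply succ_block_ordered.
  - apply succ_block_onto.
Qed.

End Succ.
End SuccBlocks.

Section LimitBlocks.
Context {K : Type} (lt : K -> K -> Prop) (Hwo : well_order lt).
Notation Opi := (omega_pow_interval K).
Let ltT := wo_trich lt Hwo.
Let ltI := wo_irrefl lt Hwo.
Let ltTr := wo_trans lt Hwo.
Notation olt := (olt lt).
Notation ole := (ole lt).
Notation pow_ival := (pow_ival lt).

Definition vanish_above (m : K) (g : @CNFpos K) := forall i, lt m i -> proj1_sig g i = 0.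

(* Ordinal addition [omega^m + p] in Cantor normal form: [omega^m] is absorbed unless [p]
   vanishes above [m]. *)
Definition shift_past (m : K) (p : Opi) : Opi :=
  match p with
  | Some g => if excluded_middle_informative (vanish_above m g) then Some (cnf_shift (uvec m) (fin_supp_uvec m) g) else Some g
  | None => None
  end.

Lemma shift_past_le : forall m k p, lt m k -> pow_ival (Some k) p -> ole (shift_past m p) (omega_pow (Some k)).
Proof.
  intros m k p Hmk Hp. destruct (pow_ival_some lt _ _ Hp) as [g [-> Hg]]. simpl.
  destruct (excluded_middle_informative (vanish_above m g)) as [Z|NZ].
  - left. simpl. apply (cnf_lt_uvec lt Hwo). intros i Hi. simpl in Hi. unfold cnf_add in Hi.
    destruct (classic (i = m)) as [E|E]. subst; auto.
    rewrite uvec_other in Hi; auto. destruct (ltT m i) as [H|[H|H]].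
    + rewrite Z in Hi; auto. lia.
    + subst; tauto.
    + eapply ltTr; eauto.
  - apply (pow_ival_le lt Hwo (Some k)). exact Hp.
Qed.

Lemma shift_past_gt : forall m k p, pow_ival (Some k) p -> olt (Some (uvec_cnf m)) (shift_past m p).
Proof.
  intros m k p Hp. destruct (pow_ival_some lt _ _ Hp) as [g [-> Hg]]. simpl.
  destruct (excluded_middle_informative (vanish_above m g)) as [Z|NZ]; simpl.
  - apply cnf_ext with (f := uvec m) (g := cnf_add (uvec m) (proj1_sig g)); auto.
    intro k'; unfold cnf_add; lia.
    apply (cnf_lt_addr lt Hwo). apply fin_supp_uvec. apply cnfpos_fin_supp. apply cnfpos_nonzero.
  - destruct (cnf_trich lt Hwo (uvec m) (proj1_sig g) (fin_supp_uvec m) (cnfpos_fin_supp g)) as [E|[H|H]]; auto.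
    + exfalso. apply NZ. intros i Hi. rewrite <- E. apply uvec_other. intro; subst; eapply ltI; eauto.
    + exfalso. apply NZ. destruct H as [k' [H1 H2]].
      assert (k' = m). { apply NNPP; intro. rewrite uvec_other in H1; auto. lia. } subst k'.
      intros i Hi. rewrite H2; auto. apply uvec_other. intro; subst; eapply ltI; eauto.
Qed.

Lemma shift_past_mono : forall m k p q, pow_ival (Some k) p -> pow_ival (Some k) q -> olt p q ->
  olt (shift_past m p) (shift_past m q).
Proof.
  intros m k p q Hp Hq Hpq. destruct (pow_ival_some lt _ _ Hp) as [g [-> Hg]].
  destruct (pow_ival_some lt _ _ Hq) as [g' [-> Hg']]. simpl in *.
  destruct (excluded_middle_informative (vanish_above m g)) as [Z|NZ];
  destruct (excluded_middle_informative (vanish_above m g')) as [Z'|NZ']; simpl.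
  - apply cnf_lt_add2r; auto.
  - destruct (cnf_trich lt Hwo (cnf_add (proj1_sig g) (uvec m)) (proj1_sig g')
       (fin_supp_add _ _ (cnfpos_fin_supp g) (fin_supp_uvec m)) (cnfpos_fin_supp g')) as [E|[H|H]]; auto.
    + exfalso. apply NZ'. intros i Hi. rewrite <- E. unfold cnf_add. rewrite Z, uvec_other; auto.
      intro; subst; eapply ltI; eauto.
    + exfalso. apply NZ'. destruct H as [k' [H1 H2]]. intros i Hi.
      destruct (Nat.eq_dec (proj1_sig g' i) 0) as [E0|E0]; auto. exfalso.
      destruct (ltT k' i) as [Hki|[Hki|Hki]].
      * rewrite H2 in E0; auto. unfold cnf_add in E0. rewrite Z, uvec_other in E0; auto.
        intro; subst; eapply ltI; eauto.
      * subst k'. unfold cnf_add in H1. rewrite Z, uvec_other in H1; auto. lia.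
        intro; subst; eapply ltI; eauto.
      * unfold cnf_add in H1. rewrite Z, uvec_other in H1. lia. intro; subst; eapply ltI; eapply ltTr; eauto.
        eapply ltTr; eauto.
  - exfalso. apply NZ. destruct Hpq as [k' [H1 H2]]. intros i Hi.
    destruct (Nat.eq_dec (proj1_sig g i) 0) as [E0|E0]; auto. exfalso.
    destruct (ltT k' i) as [Hki|[Hki|Hki]].
    + rewrite H2 in E0; auto.
    + subst k'. rewrite Z' in H1; auto. lia.
    + rewrite Z' in H1. lia. eapply ltTr; eauto.
  - auto.
Qed.

Lemma shift_past_onto : forall m k f, lt m k -> olt (omega_pow (Some m)) (Some f) ->
  ole (Some f) (omega_pow (Some k)) -> exists q, pow_ival (Some k) q /\ shift_past m q = Some f.
Proof.
  intros m k f Hmk Hgt Hle.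
  assert (HD : forall p, ole p (omega_pow (Some k)) -> pow_ival (Some k) p).
  { intros p [H|H]. apply (pow_ival_of_olt lt Hwo); auto. rewrite H. apply pow_ival_top. }
  simpl in Hgt. destruct (classic (vanish_above m f)) as [Z|NZ].
  - set (f' := fun i => proj1_sig f i - uvec m i).
    assert (Hfm : proj1_sig f m <> 0).
    { intro E0. apply (cnf_irrefl lt (uvec m)). eapply cnf_trans; [exact Hwo|exact Hgt|].
      apply (cnf_lt_uvec lt Hwo). intros i Hi. destruct (ltT m i) as [H|[H|H]]; auto.
      rewrite Z in Hi; auto; lia. subst; tauto. }
    assert (Hf' : fin_supp f' /\ exists i, f' i <> 0).
    { split.
      - destruct (cnfpos_fin_supp f) as [l Hl0]. exists l. intros i Hi. apply Hl0. unfold f' in Hi. lia.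
      - apply NNPP; intro Hno.
        assert (Ef : forall i, proj1_sig f i = uvec m i).
        { intro i. destruct (Nat.eq_dec (f' i) 0) as [E|E]; [|exfalso; eauto].
          unfold f' in E. destruct (classic (i = m)). subst; rewrite uvec_self in *; lia.
          rewrite uvec_other in *; auto; lia. }
        apply (cnf_irrefl lt (uvec m)). eapply cnf_ext; [| |exact Hgt]; auto. }
    set (q := exist _ f' Hf' : @CNFpos K).
    exists (Some q). split.
    + apply HD. left. simpl. apply (cnf_lt_uvec lt Hwo). intros i Hi. simpl in Hi. unfold f' in Hi.
      assert (lt i m \/ i = m).
      { destruct (ltT m i) as [H|[H|H]]; auto. rewrite Z in Hi; auto. lia. }
      destruct H as [H|H]; [eapply ltTr; eauto | subst; auto].
    + simpl. destruct (excluded_middle_informative (vanish_above m q)) as [Zq|NZq].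
      * apply some_cnfpos_eq. intro i. simpl. unfold cnf_add, f'.
        destruct (classic (i = m)) as [E|E]. rewrite E, uvec_self; lia. rewrite uvec_other; auto; lia.
      * exfalso. apply NZq. intros i Hi. simpl. unfold f'. rewrite Z; auto.
  - exists (Some f). split; [apply HD; auto|]. simpl.
    destruct (excluded_middle_informative (vanish_above m f)); tauto.
Qed.

Lemma nat_least : forall (Q : nat -> Prop), (exists n, Q n) -> exists n, Q n /\ forall m, m < n -> ~ Q m.
Proof.
  intros Q [n Hn]. induction n as [n IH] using (well_founded_induction Wf_nat.lt_wf).
  destruct (classic (exists m, m < n /\ Q m)) as [[m [Hm Qm]]|Hno].
  - apply (IH m Hm Qm).
  - exists n. split; auto. intros m Hm Qm. apply Hno; eauto.
Qed.

Lemma increasing_lt : forall beta : nat -> K, (forall n, lt (beta n) (beta (S n))) ->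
  forall m n, m < n -> lt (beta m) (beta n).
Proof.
  intros beta Hinc m n Hmn. induction Hmn; auto. eapply ltTr; eauto.
Qed.

(* Block [0] is [1, omega^(beta 0)] and block [n+1] is [omega^(beta n) + [1, omega^(beta (n+1))]]. *)
Definition limit_block (beta : nat -> K) (n : nat) (p : Opi) : Opi :=
  match n with 0 => p | S n' => shift_past (beta n') p end.

Section Limit.
Variable a : option K.
Hypothesis Hl : is_limit_ord lt a.
Let below k := ltx lt (Some k) a.

Lemma limit_above_two : forall k1 k2, below k1 -> below k2 ->
  exists k, below k /\ lt k1 k /\ lt k2 k.
Proof.
  intros k1 k2 H1 H2.
  assert (Hm : exists m, below m /\ (lt k1 m \/ k1 = m) /\ (lt k2 m \/ k2 = m)).
  { destruct (ltT k1 k2) as [H|[H|H]]; [exists k2|exists k2|exists k1]; subst; auto. }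
  destruct Hm as [m [Hbm [Hm1 Hm2]]].
  destruct (limit_between lt Hwo a (Some m) Hl Hbm) as [[k|] [Hmk Hk]]; [|destruct Hk].
  simpl in Hmk. exists k. split; [exact Hk|].
  split; [destruct Hm1 as [H|H]|destruct Hm2 as [H|H]]; subst; eauto.
Qed.

(* Enumerating [K] by an injection into [nat], step [n] overtakes the element of code [n]. *)
Lemma cofinal_sequence : countable_type K -> exists beta : nat -> K,
  (forall n, below (beta n)) /\ (forall n, lt (beta n) (beta (S n))) /\
  (forall k, below k -> exists N, lt k (beta N)).
Proof.
  intros [code Hcode].
  assert (Hnext : forall n k, exists k', below k -> below k' /\ lt k k' /\
            forall k'', code k'' = n -> below k'' -> lt k'' k').
  { intros n k. destruct (classic (below k)) as [Hb|Hb]; [|exists k; tauto].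
    destruct (classic (exists k'', code k'' = n /\ below k'')) as [[k'' [Hc Hb'']]|Hno].
    - destruct (limit_above_two k k'' Hb Hb'') as [k' [Hk' [H1 H2]]].
      exists k'. intros _. split; auto. split; auto. intros k3 Hc3 _.
      replace k3 with k''; auto. apply Hcode. congruence.
    - destruct (limit_above_two k k Hb Hb) as [k' [Hk' [H1 _]]].
      exists k'. intros _. split; auto. split; auto. intros k3 Hc3 Hb3. exfalso; eauto. }
  assert (H0 : exists k0, below k0).
  { destruct Hl as [Hz _]. apply NNPP; intro Hn. apply Hz. intros [b|] Hb.
    apply Hn; exists b; auto. destruct a; destruct Hb. }
  destruct H0 as [k0 Hk0].
  set (nx := fun n k => proj1_sig (constructive_indefinite_description _ (Hnext n k))).
  assert (Hnx : forall n k, below k -> below (nx n k) /\ lt k (nx n k) /\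
            forall k'', code k'' = n -> below k'' -> lt k'' (nx n k)).
  { intros n k. unfold nx. destruct (constructive_indefinite_description _ (Hnext n k)); auto. }
  set (beta := fix beta n := match n with 0 => k0 | S n' => nx n' (beta n') end).
  assert (Hb : forall n, below (beta n)).
  { induction n; simpl; auto. apply Hnx; auto. }
  exists beta. split; [exact Hb|]. split.
  - intro n. exact (proj1 (proj2 (Hnx n (beta n) (Hb n)))).
  - intros k Hk. exists (S (code k)). exact (proj2 (proj2 (Hnx (code k) (beta (code k)) (Hb (code k)))) k eq_refl Hk).
Qed.

Section Sequence.
Variable beta : nat -> K.
Hypotheses (Hb : forall n, below (beta n)) (Hinc : forall n, lt (beta n) (beta (S n)))
  (Hcof : forall k, below k -> exists N, lt k (beta N)).

Lemma limit_block_le : forall n p, pow_ival (Some (beta n)) p ->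
  ole (limit_block beta n p) (omega_pow (Some (beta n))).
Proof.
  intros [|n] p Hp; simpl.
  - apply (pow_ival_le lt Hwo (Some _)). exact Hp.
  - apply shift_past_le; auto.
Qed.

Lemma limit_block_ordered : forall m n p q, m < n -> pow_ival (Some (beta m)) p ->
  pow_ival (Some (beta n)) q -> olt (limit_block beta m p) (limit_block beta n q).
Proof.
  intros m n p q Hmn Hp Hq. destruct n as [|n]; [lia|].
  eapply (ole_olt_trans lt Hwo); [apply limit_block_le; eauto|].
  apply (ole_olt_trans lt Hwo _ (omega_pow (Some (beta n)))); [|eapply shift_past_gt; eauto].
  apply (omega_pow_le lt Hwo). destruct (Nat.eq_dec m n) as [->|E]; [right; auto|].
  left. apply increasing_lt; auto. lia.
Qed.

Lemma olt_omega_pow_beta : forall f, olt (Some f) (omega_pow a) ->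
  exists n, ole (Some f) (omega_pow (Some (beta n))).
Proof.
  intros f Hr.
  assert (Hbel : forall i, proj1_sig f i <> 0 -> below i).
  { intros i Hi. destruct a as [ka|]; simpl in *; auto.
    apply (supp_below_of_cnf_lt_uvec lt Hwo) in Hr. apply Hr; auto. }
  destruct (cnfpos_fin_supp f) as [lf Hlf].
  destruct (list_max_exists lt Hwo (fun i => proj1_sig f i <> 0) lf) as [L [HL [_ HLmax]]].
  { destruct (cnfpos_nonzero f) as [k Hk]. exists k. split; auto. }
  destruct (Hcof L (Hbel L HL)) as [N HN].
  exists N. left. simpl. apply (cnf_lt_uvec lt Hwo). intros i Hi.
  destruct (HLmax i Hi (Hlf i Hi)) as [->|H]; eauto.
Qed.

Lemma limit_block_onto : forall r, olt r (omega_pow a) ->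
  exists n p, pow_ival (Some (beta n)) p /\ limit_block beta n p = r.
Proof.
  intros r Hr. destruct r as [f|]; [|destruct a; destruct Hr].
  destruct (nat_least _ (olt_omega_pow_beta f Hr)) as [[|n] [Hn Hmin]].
  - exists 0, (Some f). split; auto. destruct Hn as [H|H].
    + apply (pow_ival_of_olt lt Hwo); auto.
    + rewrite H. apply pow_ival_top.
  - assert (Hgt : olt (omega_pow (Some (beta n))) (Some f)).
    { destruct (olt_trich lt Hwo (omega_pow (Some (beta n))) (Some f)) as [H|[H|H]]; auto;
      exfalso; apply (Hmin n); auto; [right; auto|left; auto]. }
    destruct (shift_past_onto (beta n) (beta (S n)) f (Hinc n) Hgt Hn) as [q Hq].
    exists (S n), q. exact Hq.
Qed.

Lemma pow_decomp_limit : pow_decomp lt a (fun n => Some (beta n)) (limit_block beta).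
Proof.
  constructor.
  - exact Hb.
  - intros [b|] Hb'; [|destruct a; destruct Hb'].
    destruct (Hcof b Hb') as [N HN]. exists N. intros n Hn. left. simpl.
    destruct (Nat.eq_dec N n) as [<-|E]; auto. eapply ltTr; [exact HN|]. apply increasing_lt; auto. lia.
  - intros [|n] p q Hp Hq Hpq; simpl; auto. eapply shift_past_mono; eauto.
  - intros n p Hp. eapply (ole_olt_trans lt Hwo); [apply limit_block_le; auto|].
    apply (omega_pow_lt lt Hwo). apply Hb.
  - apply limit_block_ordered.
  - apply limit_block_onto.
Qed.

End Sequence.
End Limit.
End LimitBlocks.

Lemma pow_decomp_exists : forall {K : Type} (lt : K -> K -> Prop), well_order lt -> countable_type K ->
  forall a, ~ is_zero_ord lt a -> exists gam io, pow_decomp lt a gam io.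
Proof.
  intros K lt Hwo Hc a Hz. destruct (ord_cases lt a) as [H|[[[j|] Hs]|Hl]].
  - tauto.
  - exists (fun _ => Some j), (succ_block j). apply pow_decomp_succ; auto.
  - destruct Hs as [[] _].
  - destruct (cofinal_sequence lt Hwo a Hl Hc) as [beta [Hb [Hinc Hcof]]].
    exists (fun n => Some (beta n)), (limit_block lt beta). apply pow_decomp_limit; auto.
Qed.

Close Scope nat_scope.
Open Scope R_scope.

Section Metric.
Context {X : Type} (d : X -> X -> R) (Hmet : is_metric d).

Lemma dist_ge0 : forall x y, 0 <= d x y. Proof. apply Hmet. Qed.
Lemma dist_self : forall x, d x x = 0. Proof. intro x. apply (proj1 (proj2 Hmet)). auto. Qed.
Lemma dist_eq0 : forall x y, d x y = 0 -> x = y. Proof. intros x y. apply (proj1 (proj2 Hmet)). Qed.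
Lemma dist_sym : forall x y, d x y = d y x. Proof. apply Hmet. Qed.
Lemma dist_tri : forall x y z, d x z <= d x y + d y z. Proof. apply Hmet. Qed.
Lemma dist_pos : forall x y, x <> y -> 0 < d x y.
Proof. intros x y H. destruct (dist_ge0 x y) as [H1|H1]; auto. exfalso; apply H, dist_eq0; auto. Qed.

Definition closed (A : X -> Prop) := forall y, (forall e, 0 < e -> exists z, A z /\ d y z < e) -> A y.

Lemma closed_of_open : forall A, open_in d (fun y => ~ A y) -> closed A.
Proof.
  intros A HO y Hy. apply NNPP; intro Hn. destruct (HO y Hn) as [e [He HB]].
  destruct (Hy e He) as [z [Hz Hd]]. exact (HB z Hd Hz).
Qed.

Lemma acc_closed : forall A, closed (acc d A).
Proof.
  intros A y Hy e He. destruct (Hy (e/2) ltac:(lra)) as [w [Hw Hdw]].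
  destruct (classic (w = y)) as [E|E].
  - subst. apply Hw; auto.
  - destruct (Hw (Rmin (e/2) (d w y)) ltac:(apply Rmin_pos; [lra|apply dist_pos; auto])) as [z [Hz [Hzw Hdz]]].
    exists z. split; auto. split.
    + intro Ezy; subst. pose proof (Rmin_r (e/2) (d w y)). lra.
    + pose proof (Rmin_l (e/2) (d w y)). pose proof (dist_tri y w z). lra.
Qed.

Lemma acc_mono : forall (A B : X -> Prop), (forall z, A z -> B z) -> forall y, acc d A y -> acc d B y.
Proof. intros A B HAB y H e He. destruct (H e He) as [z [Hz Hd]]. eauto. Qed.

Lemma acc_ext : forall (A B : X -> Prop), (forall z, A z <-> B z) -> forall y, acc d A y <-> acc d B y.
Proof. intros A B E y; split; apply acc_mono; intro z; apply E. Qed.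

Lemma acc_sub_closed : forall A H, closed A -> forall y, acc d (fun z => A z /\ H z) y -> A y.
Proof. intros A H HA y Hy. apply HA. intros e He. destruct (Hy e He) as [z [[Hz _] [_ Hd]]]. eauto. Qed.

Lemma acc_remove_point : forall A p y, acc d A y -> acc d (fun z => A z /\ z <> p) y.
Proof.
  intros A p y H e He. destruct (classic (y = p)) as [E|E].
  - subst. destruct (H e He) as [z [Hz [Hzp Hd]]]. exists z. auto.
  - destruct (H (Rmin e (d y p)) ltac:(apply Rmin_pos; [lra|apply dist_pos; auto])) as [z [Hz [Hzy Hd]]].
    exists z. pose proof (Rmin_l e (d y p)). pose proof (Rmin_r e (d y p)). split; [split; auto|split; auto; lra].
    intro; subst; lra.
Qed.

Lemma acc_restrict : forall (A H : X -> Prop) p, (forall z, A z -> z <> p -> H z) ->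
  forall y, acc d (fun z => A z /\ H z) y <-> acc d A y.
Proof.
  intros A H p HA y. split.
  - apply acc_mono. tauto.
  - intro Hy. apply (acc_remove_point A p) in Hy. revert Hy. apply acc_mono. intros z [Hz Hzp]. auto.
Qed.

Lemma ball_open : forall x r, open_in d (ball d x r).
Proof.
  intros x r y Hy. unfold ball in *. exists (r - d x y). split. lra.
  intros z Hz. pose proof (dist_tri x y z). lra.
Qed.

(* For [H = {|h| > M}] this is the paper's [h_M], convertibly: [hM d h M = deriv_in (big h M)]. *)
Definition deriv_in (H : X -> Prop) (A : X -> Prop) : X -> Prop := acc d (fun y => A y /\ H y).

Context {K : Type} (lt : K -> K -> Prop) (Hwo : well_order lt).

Lemma iterate_closed_antitone : forall H A, closed A -> forall a,
  closed (iterate lt (deriv_in H) A a) /\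
  forall b y, lex lt b a -> iterate lt (deriv_in H) A a y -> iterate lt (deriv_in H) A b y.
Proof.
  intros H A HA a. induction (ltx_wf lt Hwo a) as [a _ IH].
  destruct (ord_cases lt a) as [Hz|[[b Hs]|Hl]].
  - split.
    + intros y Hy. apply (proj2 (iterate_zero lt Hwo (deriv_in H) A a y Hz)). apply HA. intros e He.
      destruct (Hy e He) as [z [Hz0 Hd]]. exists z. split; auto. apply (iterate_zero lt Hwo (deriv_in H) A a z Hz); auto.
    + intros b y Hb Hy. destruct Hb as [Hb|Hb]. exfalso; apply (Hz b Hb). subst; auto.
  - split.
    + intros y Hy. apply (proj2 (iterate_succ lt Hwo (deriv_in H) A b a y Hs)). apply acc_closed. intros e He.
      destruct (Hy e He) as [z [Hz Hd]]. exists z. split; auto. exact (proj1 (iterate_succ lt Hwo (deriv_in H) A b a z Hs) Hz).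
    + intros c y Hc Hy. destruct Hc as [Hc|Hc]; [|subst; auto].
      destruct Hs as [Hba Hm]. destruct (IH b Hba) as [Hcl Hdec].
      assert (Hyb : iterate lt (deriv_in H) A b y).
      { apply (proj1 (iterate_succ lt Hwo (deriv_in H) A b a y (conj Hba Hm))) in Hy.
        eapply acc_sub_closed; eauto. }
      apply Hdec; auto. destruct (Hm c Hc) as [E|E]. right; auto. left; auto.
  - split.
    + intros y Hy. apply (proj2 (iterate_limit lt Hwo (deriv_in H) A a y Hl)). intros b Hb. destruct (IH b Hb) as [Hcl _].
      apply Hcl. intros e He. destruct (Hy e He) as [z [Hz Hd]]. exists z. split; auto.
      exact (proj1 (iterate_limit lt Hwo (deriv_in H) A a z Hl) Hz b Hb).
    + intros c y Hc Hy. destruct Hc as [Hc|Hc]; [|subst; auto].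
      exact (proj1 (iterate_limit lt Hwo (deriv_in H) A a y Hl) Hy c Hc).
Qed.

Lemma acc_sub_singleton : forall (A : X -> Prop) x y, (forall z, A z -> z = x) -> ~ acc d A y.
Proof.
  intros A x y HA Hy. destruct (classic (y = x)) as [->|E].
  - destruct (Hy 1 ltac:(lra)) as [z [Hz [Hzx _]]]. exact (Hzx (HA z Hz)).
  - destruct (Hy (d y x) (dist_pos y x E)) as [z [Hz [_ Hd]]]. rewrite (HA z Hz) in Hd. lra.
Qed.

Lemma iterate_deriv_singleton : forall H x g y,
  iterate lt (deriv_in H) (fun u => u = x) g y <-> y = x /\ is_zero_ord lt g.
Proof.
  intros H x g. induction (ltx_wf lt Hwo g) as [g _ IH]. intro y.
  destruct (ord_cases lt g) as [Hzg|[[b Hs]|Hl]].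
  - rewrite (iterate_zero lt Hwo _ _ g y Hzg). tauto.
  - rewrite (iterate_succ lt Hwo _ _ b g y Hs). split.
    + intro Hy. exfalso. revert Hy. apply (acc_sub_singleton _ x).
      intros z [Hz _]. apply (proj1 (IH b (proj1 Hs) z) Hz).
    + intros [_ Hzg]. exfalso. eapply succ_not_zero; eauto.
  - rewrite (iterate_limit lt Hwo _ _ g y Hl). split.
    + intro Hy. exfalso. destruct Hl as [Hnz Hns]. apply Hnz. intros b Hb.
      destruct (limit_between lt Hwo g b (conj Hnz Hns) Hb) as [c [Hbc Hcg]].
      exact (proj2 (proj1 (IH c Hcg y) (Hy c Hcg)) b Hbc).
    + intros [_ Hzg]. exfalso. apply (proj1 Hl). auto.
Qed.

End Metric.

Section PowCopy.
Context {X : Type} (d : X -> X -> R) (Hmet : is_metric d) (h : X -> R) (M : R).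
Context {K : Type} (lt : K -> K -> Prop) (Hwo : well_order lt).
Notation Opi := (omega_pow_interval K).
Notation olt := (olt lt).
Notation ole := (ole lt).
Notation pow_ival := (pow_ival lt).
Notation It H A := (iterate lt (deriv_in d H) A).

(* Continuity at [u] of [phi] restricted to [F] into the order topology; since [phi u] has an
   immediate successor, its basic neighbourhoods are the intervals [(lo, phi u]]. *)
Definition order_cont_at (phi : X -> Opi) (F : X -> Prop) (u : X) : Prop :=
  (forall lo, olt lo (phi u) -> exists del, 0 < del /\ forall v, F v -> d u v < del -> olt lo (phi v)) /\
  (exists del, 0 < del /\ forall v, F v -> d u v < del -> ole (phi v) (phi u)).

Definition big (u : X) := M < Rabs (h u).

(* The induction invariant: [F] is a compact copy of [1, omega^a] near [x], whose derivatives
   relative to any [H] containing [{|h| > M}] shrink to [{x}] exactly at stage [a]. *)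
Record pow_copy (a : option K) (x : X) (eps : R) (F : X -> Prop) (phi : X -> Opi) : Prop := {
  pc_ball : forall u, F u -> d x u < eps;
  pc_big : forall u, F u -> u <> x -> big u;
  pc_compact : compact_in d F;
  pc_range : forall u, F u -> pow_ival a (phi u);
  pc_inj : forall u v, F u -> F v -> phi u = phi v -> u = v;
  pc_onto : forall p, pow_ival a p -> exists u, F u /\ phi u = p;
  pc_cont : forall u, F u -> order_cont_at phi F u;
  pc_iter_in : forall H, (forall u, big u -> H u) -> forall g y, It H F g y -> F y;
  pc_iter_center : forall H, (forall u, big u -> H u) -> forall g, lex lt g a -> It H F g x;
  pc_iter_lex : forall H, (forall u, big u -> H u) -> forall g y, It H F g y -> lex lt g a;
  pc_iter_top : forall H, (forall u, big u -> H u) -> forall y, It H F a y -> y = x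
}.

Lemma pow_copy_zero : forall a x eps, is_zero_ord lt a -> 0 < eps ->
  pow_copy a x eps (fun u => u = x) (fun _ => omega_pow a).
Proof.
  intros a x eps Hz Heps.
  assert (Cl := fun H g y => iterate_deriv_singleton d Hmet lt Hwo H x g y).
  constructor.
  - intros u ->. rewrite (dist_self d Hmet). auto.
  - intros u Hu Hne; tauto.
  - intros I U HU Hcov. destruct (Hcov x eq_refl) as [i Hi]. exists (i :: nil).
    intros y ->. exists i. split; [left; auto|auto].
  - intros; apply pow_ival_top.
  - intros u v -> -> _; auto.
  - intros p Hp. exists x. split; auto. symmetry; apply (pow_ival_zero lt); auto.
  - intros u Hu. split.
    + intros lo Hlo. exists 1. split. lra. intros v Hv _. auto.
    + exists 1. split. lra. intros. right; auto.
  - intros H _ g y Hy. apply Cl in Hy. tauto.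
  - intros H _ g [Hg| ->]. exfalso; exact (Hz g Hg). apply Cl. auto.
  - intros H _ g y Hy. apply Cl in Hy. apply (zero_lex lt Hwo). tauto.
  - intros H _ y Hy. apply Cl in Hy. tauto.
Qed.

End PowCopy.

Arguments pc_ball {X d h M K lt a x eps F phi}.
Arguments pc_big {X d h M K lt a x eps F phi}.
Arguments pc_compact {X d h M K lt a x eps F phi}.
Arguments pc_range {X d h M K lt a x eps F phi}.
Arguments pc_inj {X d h M K lt a x eps F phi}.
Arguments pc_onto {X d h M K lt a x eps F phi}.
Arguments pc_cont {X d h M K lt a x eps F phi}.
Arguments pc_iter_in {X d h M K lt a x eps F phi}.
Arguments pc_iter_center {X d h M K lt a x eps F phi}.
Arguments pc_iter_lex {X d h M K lt a x eps F phi}.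
Arguments pc_iter_top {X d h M K lt a x eps F phi}.
Arguments pd_lt {K lt a gam io}.
Arguments pd_cofinal {K lt a gam io}.
Arguments pd_mono {K lt a gam io}.
Arguments pd_below {K lt a gam io}.
Arguments pd_ordered {K lt a gam io}.
Arguments pd_onto {K lt a gam io}.

Section Glue.
Context {X : Type} (d : X -> X -> R) (Hmet : is_metric d) (h : X -> R) (M : R).
Context {K : Type} (lt : K -> K -> Prop) (Hwo : well_order lt).
Notation Opi := (omega_pow_interval K).
Notation olt := (olt lt).
Notation ole := (ole lt).
Notation pow_ival := (pow_ival lt).
Notation It H A := (iterate lt (deriv_in d H) A).
Notation pow_copy := (pow_copy d h M lt).
Notation big := (big h M).

Context (a : option K) (gam : nat -> option K) (io : nat -> Opi -> Opi) (HB : pow_decomp lt a gam io).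
Context (x : X) (eps : R) (Heps : 0 < eps) (xs : nat -> X) (Fs : nat -> X -> Prop) (phis : nat -> X -> Opi).
Context (Ht0 : d x (xs 0) < eps / 2) (Htd : forall n, d x (xs (S n)) < d x (xs n) / 2)
        (Hxn : forall n, xs n <> x) (Hhx : forall n, big (xs n))
        (Hpieces : forall n, pow_copy (gam n) (xs n) (d x (xs n) / 10) (Fs n) (phis n)).

Let rad n := d x (xs n).

Lemma rad_pos : forall n, 0 < rad n.
Proof. intro n. apply (dist_pos d Hmet). auto. Qed.

Lemma rad_dec : forall m n, (m < n)%nat -> 2 * rad n < rad m.
Proof.
  intros m n Hmn. induction Hmn.
  - pose proof (Htd m). unfold rad. lra.
  - pose proof (Htd m0). pose proof (rad_pos m0). unfold rad in *. lra.
Qed.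

Lemma rad_le : forall m n, (m <= n)%nat -> rad n <= rad m.
Proof.
  intros m n H. destruct (Nat.eq_dec m n). subst; lra.
  pose proof (rad_dec m n ltac:(lia)). pose proof (rad_pos n). lra.
Qed.

Lemma rad_small : forall del, 0 < del -> exists N, forall n, (N <= n)%nat -> 11/10 * rad n < del.
Proof.
  intros del Hdel.
  assert (Hp : forall n, rad n <= rad 0 * (1/2)^n).
  { induction n. simpl; lra. simpl. pose proof (Htd n). unfold rad in *. lra. }
  destruct (pow_lt_1_zero (1/2) ltac:(rewrite Rabs_pos_eq; lra) (del / (2 * (rad 0 + 1))))
    as [N HN].
  { apply Rdiv_lt_0_compat. lra. pose proof (rad_pos 0). lra. }
  exists N. intros n Hn. specialize (HN N (le_n N)).
  rewrite Rabs_pos_eq in HN by (apply pow_le; lra).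
  pose proof (rad_le N n Hn). pose proof (Hp N). pose proof (rad_pos 0).
  assert (rad 0 * (1/2)^N <= (rad 0 + 1) * (1/2)^N).
  { apply Rmult_le_compat_r. apply pow_le; lra. lra. }
  assert ((rad 0 + 1) * (1/2)^N < (rad 0 + 1) * (del / (2 * (rad 0 + 1)))).
  { apply Rmult_lt_compat_l; lra. }
  assert ((rad 0 + 1) * (del / (2 * (rad 0 + 1))) = del / 2) by (field; lra).
  lra.
Qed.

(* Piece [n] lies within [rad n / 10] of [x_n]; since the radii at least halve, these shells
   are pairwise separated, with gaps proportional to their radii. *)
Definition in_shell n z := 9/10 * rad n < d x z < 11/10 * rad n.

Lemma piece_in_shell : forall n z, Fs n z -> in_shell n z.
Proof.
  intros n z Hz. pose proof (pc_ball (Hpieces n) z Hz).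
  pose proof (dist_tri d Hmet x (xs n) z). pose proof (dist_tri d Hmet x z (xs n)). rewrite (dist_sym d Hmet z (xs n)) in *.
  unfold in_shell, rad. lra.
Qed.

Lemma shell_index_unique : forall n m s z, 4/5 * rad n < s < 6/5 * rad n -> in_shell m z ->
  s - s/20 < d x z < s + s/20 -> m = n.
Proof.
  intros n m s z Hs Hz Hd. unfold in_shell in Hz.
  destruct (Nat.lt_trichotomy m n) as [H|[H|H]]; auto.
  - pose proof (rad_dec m n H). lra.
  - pose proof (rad_dec n m H). lra.
Qed.

Lemma shell_width : forall m s z, in_shell m z -> 0 < s -> s - s/20 < d x z < s + s/20 ->
  4/5 * rad m < s < 6/5 * rad m.
Proof. intros m s z Hz Hs Hd. unfold in_shell in Hz. lra. Qed.

Lemma dist_center_near : forall y z, d y z < d x y / 20 -> d x y - d x y / 20 < d x z < d x y + d x y / 20.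
Proof.
  intros y z H. pose proof (dist_tri d Hmet x y z). pose proof (dist_tri d Hmet x z y). rewrite (dist_sym d Hmet z y) in *. lra.
Qed.

Lemma pieces_disjoint : forall n m z, Fs n z -> Fs m z -> m = n.
Proof.
  intros n m z Hn Hm. pose proof (piece_in_shell n z Hn). pose proof (piece_in_shell m z Hm).
  apply (shell_index_unique n m (d x z) z); auto. unfold in_shell in *; lra.
  pose proof (rad_pos n). unfold in_shell in *. lra.
Qed.

Lemma center_notin_piece : forall n, ~ Fs n x.
Proof.
  intros n H. pose proof (piece_in_shell n x H). unfold in_shell in *. rewrite (dist_self d Hmet) in *.
  pose proof (rad_pos n). lra.
Qed.

Definition glue (u : X) : Prop := u = x \/ exists n, Fs n u.

Lemma piece_local : forall n u v, Fs n u -> glue v -> d u v < d x u / 20 -> Fs n v.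
Proof.
  intros n u v Hu [->|[m Hv]] Hd.
  - exfalso. pose proof (dist_center_near u x Hd). rewrite (dist_self d Hmet) in *. pose proof (piece_in_shell n u Hu).
    pose proof (rad_pos n). unfold in_shell in *. lra.
  - pose proof (dist_center_near u v Hd). pose proof (piece_in_shell n u Hu). pose proof (piece_in_shell m v Hv).
    assert (m = n) by (apply (shell_index_unique n m (d x u) v); auto; unfold in_shell in *; lra). subst; auto.
Qed.

Lemma acc_glue : forall (S : nat -> X -> Prop) (c : Prop), (forall n z, S n z -> Fs n z) -> forall y,
  acc d (fun z => (z = x /\ c) \/ exists n, S n z) y <->
  (y = x /\ forall N, exists n, (N <= n)%nat /\ exists z, S n z) \/ exists n, acc d (S n) y.
Proof.
  intros S c HS y. split.
  - intro Hy. destruct (classic (y = x)) as [E|E].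
    + subst y. left. split; auto. intro N. pose proof (rad_pos N).
      destruct (Hy (9/10 * rad N) ltac:(lra)) as [z [[[Ez _]|[n Hz]] [Hzx Hd]]]. subst; tauto.
      exists n. split; [|eauto]. pose proof (piece_in_shell n z (HS n z Hz)). unfold in_shell in *.
      destruct (Compare_dec.le_lt_dec N n) as [L|L]; auto. pose proof (rad_dec n N L). pose proof (rad_pos n).
      lra.
    + right. set (s := d x y). assert (Hs : 0 < s) by (apply (dist_pos d Hmet); auto).
      destruct (Hy (s/20) ltac:(lra)) as [z [[[Ez _]|[m Hz]] [Hzy Hd]]].
      * subst z. exfalso. pose proof (dist_center_near y x Hd). rewrite (dist_self d Hmet) in *. unfold s in *. lra.
      * exists m. pose proof (dist_center_near y z Hd). pose proof (piece_in_shell m z (HS m z Hz)).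
        assert (Hw : 4/5 * rad m < s < 6/5 * rad m) by (apply (shell_width m s z); auto).
        intros e He. destruct (Hy (Rmin e (s/20)) ltac:(apply Rmin_pos; lra)) as [z' [[[Ez' _]|[m' Hz']] [Hzy' Hd']]].
        -- subst z'. exfalso. pose proof (Rmin_r e (s/20)). pose proof (dist_center_near y x ltac:(unfold s in *; lra)).
           rewrite (dist_self d Hmet) in *. unfold s in *. lra.
        -- pose proof (Rmin_l e (s/20)). pose proof (Rmin_r e (s/20)).
           pose proof (dist_center_near y z' ltac:(unfold s in *; lra)).
           assert (m' = m) by (apply (shell_index_unique m m' s z'); auto; apply piece_in_shell; apply HS; auto).
           subst m'. exists z'. split; auto. split; auto. lra.
  - intros [[-> Hinf]|[n Hn]].
    + intros e He. destruct (rad_small e He) as [N HN]. destruct (Hinf N) as [n [Hn [z Hz]]].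
      exists z. split; [right; eauto|]. split.
      * intro E; subst. apply (center_notin_piece n). apply HS; auto.
      * pose proof (piece_in_shell n z (HS n z Hz)). pose proof (HN n Hn). unfold in_shell in *. lra.
    + revert Hn. apply acc_mono. intros z Hz. right; eauto.
Qed.



Definition glue_map (u : X) : Opi :=
  match excluded_middle_informative (exists n, Fs n u) with
  | left H => io (proj1_sig (constructive_indefinite_description _ H))
                 (phis (proj1_sig (constructive_indefinite_description _ H)) u)
  | right _ => omega_pow a
  end.

Lemma glue_map_piece : forall n u, Fs n u -> glue_map u = io n (phis n u).
Proof.
  intros n u Hu. unfold glue_map. destruct (excluded_middle_informative (exists n, Fs n u)) as [H|H].
  - destruct (constructive_indefinite_description _ H) as [m Hm]; simpl.
    rewrite (pieces_disjoint n m u Hu Hm). auto.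
  - exfalso; eauto.
Qed.

Lemma glue_map_center : glue_map x = omega_pow a.
Proof.
  unfold glue_map. destruct (excluded_middle_informative (exists n, Fs n x)) as [[n H]|H]; auto.
  exfalso; eapply center_notin_piece; eauto.
Qed.

Lemma glue_map_piece_lt : forall n u, Fs n u -> olt (glue_map u) (omega_pow a).
Proof. intros n u Hu. rewrite (glue_map_piece n u Hu). apply (pd_below HB). apply (pc_range (Hpieces _)); auto. Qed.

Lemma glue_ball : forall u, glue u -> d x u < eps.
Proof.
  intros u [->|[n Hu]]. rewrite (dist_self d Hmet). auto.
  pose proof (piece_in_shell n u Hu). pose proof (rad_le 0 n ltac:(lia)). unfold in_shell, rad in *. lra.
Qed.

Lemma glue_big : forall u, glue u -> u <> x -> big u.
Proof.
  intros u [->|[n Hu]] Hne. tauto.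
  destruct (classic (u = xs n)) as [->|E]. auto. apply (pc_big (Hpieces n)); auto.
Qed.

Lemma glue_compact : compact_in d glue.
Proof.
  intros I U HU Hcov. destruct (Hcov x (or_introl eq_refl)) as [i0 Hi0].
  destruct (HU i0 x Hi0) as [del [Hdel Hball]].
  destruct (rad_small del Hdel) as [N HN].
  assert (Hfin : forall N', exists l : list I, forall n z, (n < N')%nat -> Fs n z -> exists i, In i l /\ U i z).
  { induction N' as [|N' IH].
    - exists nil. intros n z Hn; lia.
    - destruct IH as [l Hl].
      destruct (pc_compact (Hpieces N') I U HU) as [l' Hl'].
      { intros z Hz. apply Hcov. right; eauto. }
      exists (l ++ l'). intros n z Hn Hz. destruct (Nat.eq_dec n N') as [->|E].
      + destruct (Hl' z Hz) as [i [Hi Hu]]. exists i. split; auto. apply in_or_app; auto.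
      + destruct (Hl n z ltac:(lia) Hz) as [i [Hi Hu]]. exists i. split; auto. apply in_or_app; auto. }
  destruct (Hfin N) as [l Hl]. exists (i0 :: l). intros z [->|[n Hz]].
  - exists i0. split; [left|]; auto.
  - destruct (Compare_dec.le_lt_dec N n) as [L|L].
    + exists i0. split; [left; auto|]. apply Hball. pose proof (piece_in_shell n z Hz). pose proof (HN n L).
      unfold in_shell in *. lra.
    + destruct (Hl n z L Hz) as [i [Hi Hu]]. exists i. split; [right|]; auto.
Qed.

Lemma glue_range : forall u, glue u -> pow_ival a (glue_map u).
Proof.
  intros u [->|[n Hu]]. rewrite glue_map_center. apply pow_ival_top.
  apply (pow_ival_of_olt lt Hwo). apply (glue_map_piece_lt n); auto.
Qed.

Lemma pd_inj : forall n m p q, pow_ival (gam n) p -> pow_ival (gam m) q -> io n p = io m q -> n = m /\ p = q.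
Proof.
  intros n m p q Hp Hq E.
  destruct (Nat.lt_trichotomy n m) as [L|[L|L]].
  - exfalso. pose proof (pd_ordered HB n m p q L Hp Hq). rewrite E in *. eapply (olt_irrefl lt); eauto.
  - subst m. split; auto. destruct ((olt_trich lt Hwo) p q) as [L|[L|L]]; auto; exfalso.
    + pose proof (pd_mono HB n p q Hp Hq L). rewrite E in *. eapply (olt_irrefl lt); eauto.
    + pose proof (pd_mono HB n q p Hq Hp L). rewrite E in *. eapply (olt_irrefl lt); eauto.
  - exfalso. pose proof (pd_ordered HB m n q p L Hq Hp). rewrite E in *. eapply (olt_irrefl lt); eauto.
Qed.

Lemma glue_inj : forall u v, glue u -> glue v -> glue_map u = glue_map v -> u = v.
Proof.
  intros u v [->|[n Hu]] [->|[m Hv]] E; auto.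
  - exfalso. rewrite glue_map_center in E. pose proof (glue_map_piece_lt m v Hv). rewrite <- E in *. eapply (olt_irrefl lt); eauto.
  - exfalso. rewrite glue_map_center in E. pose proof (glue_map_piece_lt n u Hu). rewrite E in *. eapply (olt_irrefl lt); eauto.
  - rewrite (glue_map_piece n u Hu), (glue_map_piece m v Hv) in E.
    destruct (pd_inj n m _ _ (pc_range (Hpieces n) u Hu) (pc_range (Hpieces m) v Hv) E) as [-> E2].
    apply (pc_inj (Hpieces m)); auto.
Qed.

Lemma glue_onto : forall p, pow_ival a p -> exists u, glue u /\ glue_map u = p.
Proof.
  intros p Hp. destruct (pow_ival_le lt Hwo a p Hp) as [L|L].
  - destruct (pd_onto HB p L) as [n [q [Hq E]]]. destruct (pc_onto (Hpieces n) q Hq) as [u [Hu Eu]].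
    exists u. split. right; eauto. rewrite (glue_map_piece n u Hu). congruence.
  - exists x. split. left; auto. rewrite glue_map_center; auto.
Qed.

Lemma glue_cont_center : order_cont_at d lt glue_map glue x.
Proof.
  split.
  - intros lo Hlo. rewrite glue_map_center in Hlo. destruct (pd_onto HB lo Hlo) as [n0 [q0 [Hq0 E0]]].
    pose proof (rad_pos (S n0)). exists (9/10 * rad (S n0)). split. lra.
    intros v [->|[n Hv]] Hd. rewrite glue_map_center. auto.
    rewrite (glue_map_piece n v Hv), <- E0. apply (pd_ordered HB); [|exact Hq0|apply (pc_range (Hpieces n) v Hv)].
    pose proof (piece_in_shell n v Hv). unfold in_shell in *.
    destruct (Compare_dec.le_lt_dec n n0) as [L|L]; [|lia].
    pose proof (rad_le n (S n0) ltac:(lia)). lra.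
  - exists 1. split. lra. intros v Hv _. rewrite glue_map_center. apply (pow_ival_le lt Hwo). apply glue_range; auto.
Qed.

(* A lower bound [lo < io n (phis n u)] either lies below the whole block [n], or equals
   [io n q] for some [q < phis n u], where continuity of [phis n] applies. *)
Lemma glue_cont_piece_lower : forall n u lo, Fs n u -> olt lo (glue_map u) ->
  exists del, 0 < del /\ forall v, glue v -> d u v < del -> olt lo (glue_map v).
Proof.
  intros n u lo Hu Hlo. rewrite (glue_map_piece n u Hu) in Hlo.
  pose proof (piece_in_shell n u Hu).
  assert (Hd0 : 0 < d x u / 20) by (pose proof (rad_pos n); unfold in_shell in *; lra).
  assert (Hrng := pc_range (Hpieces n)).
  destruct (classic (exists q0, pow_ival (gam n) q0 /\ ole (io n q0) lo)) as [[q0 [Hq0 Hle]]|Hno].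
  - assert (Hlt : olt lo (omega_pow a)).
    { eapply (olt_trans lt Hwo); [exact Hlo|apply (pd_below HB); auto]. }
    destruct (pd_onto HB lo Hlt) as [m [q [Hq Eq]]].
    assert (m = n).
    { destruct (Nat.lt_trichotomy m n) as [L|[L|L]]; auto; exfalso.
      - pose proof (pd_ordered HB m n q q0 L Hq Hq0). rewrite Eq in *.
        eapply (ole_not_olt lt Hwo); eauto.
      - pose proof (pd_ordered HB n m (phis n u) q L (Hrng u Hu) Hq). rewrite Eq in *.
        eapply (olt_asym lt Hwo); eauto. }
    subst m.
    assert (Hqp : olt q (phis n u)).
    { destruct (olt_trich lt Hwo q (phis n u)) as [L|[L|L]]; auto; exfalso.
      - subst. eapply (olt_irrefl lt); eauto.
      - pose proof (pd_mono HB n _ _ (Hrng u Hu) Hq L). rewrite Eq in *. eapply (olt_asym lt Hwo); eauto. }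
    destruct (proj1 (pc_cont (Hpieces n) u Hu) q Hqp) as [d2 [Hd2 C2]].
    exists (Rmin (d x u / 20) d2). split. apply Rmin_pos; lra.
    intros v Hv Hd. pose proof (Rmin_l (d x u / 20) d2). pose proof (Rmin_r (d x u / 20) d2).
    assert (Hv' : Fs n v) by (apply (piece_local n u v); auto; lra).
    rewrite (glue_map_piece n v Hv'), <- Eq.
    exact (pd_mono HB n q (phis n v) Hq (Hrng v Hv') (C2 v Hv' ltac:(lra))).
  - exists (d x u / 20). split; auto. intros v Hv Hd.
    assert (Hv' : Fs n v) by (apply (piece_local n u v); auto).
    rewrite (glue_map_piece n v Hv').
    destruct (olt_trich lt Hwo lo (io n (phis n v))) as [L|[L|L]]; auto; exfalso; apply Hno;
      exists (phis n v); split; auto; [right|left]; auto.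
Qed.

Lemma glue_cont_piece : forall n u, Fs n u -> order_cont_at d lt glue_map glue u.
Proof.
  intros n u Hu. split.
  - intros lo Hlo. exact (glue_cont_piece_lower n u lo Hu Hlo).
  - pose proof (piece_in_shell n u Hu).
    assert (Hd0 : 0 < d x u / 20) by (pose proof (rad_pos n); unfold in_shell in *; lra).
    destruct (pc_cont (Hpieces n) u Hu) as [_ [d1 [Hd1 Cup]]].
    exists (Rmin (d x u / 20) d1). split. apply Rmin_pos; lra.
    intros v Hv Hd. pose proof (Rmin_l (d x u / 20) d1). pose proof (Rmin_r (d x u / 20) d1).
    assert (Hv' : Fs n v) by (apply (piece_local n u v); auto; lra).
    rewrite (glue_map_piece n v Hv'), (glue_map_piece n u Hu).
    destruct (Cup v Hv' ltac:(lra)) as [L|L].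
    + left. apply (pd_mono HB); auto; apply (pc_range (Hpieces n)); auto.
    + right. rewrite L; auto.
Qed.

Lemma glue_cont : forall u, glue u -> order_cont_at d lt glue_map glue u.
Proof. intros u [->|[n Hu]]; [apply glue_cont_center|exact (glue_cont_piece n u Hu)]. Qed.

Section Derivatives.
Variable H : X -> Prop.
Hypothesis HH : forall u, big u -> H u.

Let glue_char g y := (y = x /\ lex lt g a) \/ exists n, It H (Fs n) g y.

Lemma piece_sub : forall n z, Fs n z -> H z.
Proof.
  intros n z Hz. apply HH. destruct (classic (z = xs n)) as [->|E]; auto. apply (pc_big (Hpieces n)); auto.
Qed.

(* [x] is a limit of the [b]-th derivatives of the pieces iff infinitely many of them are
   nonempty, i.e. iff [b < a], by cofinality of [gam]. *)
Lemma iterate_pieces_cofinal : forall b g, succ_of lt b g ->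
  (forall N, exists n, (N <= n)%nat /\ exists z, It H (Fs n) b z) <-> lex lt g a.
Proof.
  intros b g Hs. split.
  - intro Hinf. destruct (Hinf 0%nat) as [n [_ [z Hz]]].
    apply (succ_lex lt Hwo b g a Hs). eapply (lex_ltx_trans lt Hwo).
    + exact (pc_iter_lex (Hpieces n) H HH b z Hz).
    + apply (pd_lt HB).
  - intros Hga N. assert (Hb' : ltx lt b a) by (eapply (ltx_lex_trans lt Hwo); [apply Hs|exact Hga]).
    destruct (pd_cofinal HB b Hb') as [N0 HN0]. exists (Nat.max N N0). split. lia.
    exists (xs (Nat.max N N0)). apply (pc_iter_center (Hpieces (Nat.max N N0)) H HH b). apply HN0. lia.
Qed.

Lemma iterate_glue_succ : forall b g y, succ_of lt b g ->
  (forall z, It H glue b z <-> glue_char b z) -> (It H glue g y <-> glue_char g y).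
Proof.
  intros b g y Hs IH. unfold glue_char.
  rewrite (iterate_succ lt Hwo (deriv_in d H) glue b g y Hs). unfold deriv_in.
  rewrite (acc_restrict d Hmet _ H x).
  2:{ intros z Hz Hzx. destruct (proj1 (IH z) Hz) as [[E _]|[n Hn]]; [tauto|].
      apply (piece_sub n). exact (pc_iter_in (Hpieces n) H HH b z Hn). }
  rewrite (acc_ext d _ _ IH y). unfold glue_char.
  rewrite (acc_glue (fun n => It H (Fs n) b) (lex lt b a)).
  2:{ intros n z Hz. exact (pc_iter_in (Hpieces n) H HH b z Hz). }
  assert (E1 : forall n, It H (Fs n) g y <-> acc d (It H (Fs n) b) y).
  { intro n. rewrite (iterate_succ lt Hwo (deriv_in d H) (Fs n) b g y Hs). unfold deriv_in.
    apply (acc_restrict d Hmet _ H y). intros z Hz _.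
    apply (piece_sub n). exact (pc_iter_in (Hpieces n) H HH b z Hz). }
  rewrite (iterate_pieces_cofinal b g Hs).
  split; intros [[-> Hga]|[n Hn]]; auto; right; exists n; apply E1; auto.
Qed.

Lemma iterate_glue_limit : forall g y, is_limit_ord lt g ->
  (forall b z, ltx lt b g -> (It H glue b z <-> glue_char b z)) -> (It H glue g y <-> glue_char g y).
Proof.
  intros g y Hl IH. unfold glue_char.
  assert (HIn : forall n b z, It H (Fs n) b z -> Fs n z) by (intros n b z; apply (pc_iter_in (Hpieces n) H HH)).
  rewrite (iterate_limit lt Hwo (deriv_in d H) glue g y Hl). split.
  - intro Hy. destruct (classic (y = x)) as [->|E].
    + left. split; auto. apply (not_ltx_lex lt Hwo). intro Hag.
      destruct (limit_between lt Hwo g a Hl Hag) as [c [Hac Hcg]].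
      destruct (proj1 (IH c x Hcg) (Hy c Hcg)) as [[_ Hca]|[n Hn]].
      * eapply (lex_not_ltx lt Hwo); eauto.
      * eapply center_notin_piece. eapply HIn; eauto.
    + right. assert (Hb0 : exists b0, ltx lt b0 g).
      { apply NNPP; intro Hn. apply (proj1 Hl). intros b Hb. apply Hn; eauto. }
      destruct Hb0 as [b0 Hb0].
      destruct (proj1 (IH b0 y Hb0) (Hy b0 Hb0)) as [[E' _]|[n0 Hn0]]; [tauto|].
      exists n0. apply (iterate_limit lt Hwo (deriv_in d H) (Fs n0) g y Hl). intros b Hb.
      destruct (proj1 (IH b y Hb) (Hy b Hb)) as [[E' _]|[n Hn]]; [tauto|].
      assert (n = n0) by (apply (pieces_disjoint n0 n y); eapply HIn; eauto). subst; auto.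
  - intros [[-> Hga]|[n Hn]] b Hb; apply (IH b _ Hb).
    + left. split; auto. left. eapply (ltx_lex_trans lt Hwo); eauto.
    + right. exists n. apply (proj1 (iterate_limit lt Hwo (deriv_in d H) (Fs n) g y Hl) Hn); auto.
Qed.

Lemma iterate_glue : forall g y,
  It H glue g y <-> (y = x /\ lex lt g a) \/ exists n, It H (Fs n) g y.
Proof.
  intro g. induction (ltx_wf lt Hwo g) as [g _ IH]. intro y.
  destruct (ord_cases lt g) as [Hzg|[[b Hs]|Hl]].
  - rewrite (iterate_zero lt Hwo (deriv_in d H) glue g y Hzg). unfold glue.
    setoid_rewrite (iterate_zero lt Hwo (deriv_in d H) _ g y Hzg).
    pose proof (zero_lex lt Hwo g a Hzg). split; [intros [->|Hn]|intros [[-> _]|Hn]]; auto.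
  - apply (iterate_glue_succ b g y Hs). intro z. apply IH. apply Hs.
  - apply (iterate_glue_limit g y Hl). intros b z Hb. apply IH; auto.
Qed.

End Derivatives.

Lemma glue_pow_copy : pow_copy a x eps glue glue_map.
Proof.
  constructor.
  - apply glue_ball.
  - apply glue_big.
  - apply glue_compact.
  - apply glue_range.
  - apply glue_inj.
  - apply glue_onto.
  - apply glue_cont.
  - intros H HH g y Hy. destruct (proj1 (iterate_glue H HH g y) Hy) as [[-> _]|[n Hn]].
    + left; auto.
    + right; exists n. exact (pc_iter_in (Hpieces n) H HH g y Hn).
  - intros H HH g Hg. apply iterate_glue; auto.
  - intros H HH g y Hy. destruct (proj1 (iterate_glue H HH g y) Hy) as [[_ Hg]|[n Hn]]; auto.
    left. eapply (lex_ltx_trans lt Hwo); [exact (pc_iter_lex (Hpieces n) H HH g y Hn)|apply (pd_lt HB)].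
  - intros H HH y Hy. destruct (proj1 (iterate_glue H HH a y) Hy) as [[-> _]|[n Hn]]; auto. exfalso.
    eapply (ltx_irrefl lt Hwo). eapply (lex_ltx_trans lt Hwo); [|apply (pd_lt HB)].
    exact (pc_iter_lex (Hpieces n) H HH a y Hn).
Qed.

End Glue.

Lemma halving_sequence : forall {X : Type} (d : X -> X -> R), is_metric d ->
  forall (Q : nat -> X -> Prop) x eps, 0 < eps ->
  (forall n r, 0 < r -> exists y, Q n y /\ y <> x /\ d x y < r) ->
  exists xs : nat -> X, (forall n, Q n (xs n) /\ xs n <> x) /\
    d x (xs 0%nat) < eps / 2 /\ (forall n, d x (xs (S n)) < d x (xs n) / 2).
Proof.
  intros X d Hmet Q x eps Heps Hpt.
  assert (Hpt' : forall n r, exists y, 0 < r -> Q n y /\ y <> x /\ d x y < r).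
  { intros n r. destruct (classic (0 < r)) as [Hr|Hr]; [|exists x; tauto].
    destruct (Hpt n r Hr) as [y Hy]. exists y. auto. }
  set (sel := fun n r => proj1_sig (constructive_indefinite_description _ (Hpt' n r))).
  assert (Hsel : forall n r, 0 < r -> Q n (sel n r) /\ sel n r <> x /\ d x (sel n r) < r).
  { intros n r Hr. unfold sel. destruct (constructive_indefinite_description _ (Hpt' n r)); auto. }
  set (xs := fix xs (n : nat) : X :=
         match n with 0%nat => sel 0%nat (eps/2) | S m => sel (S m) (d x (xs m) / 2) end).
  assert (Hne : forall n, xs n <> x).
  { induction n as [|n IHn]; simpl; fold xs.
    - apply (Hsel 0%nat (eps/2)). lra.
    - apply (Hsel (S n)). pose proof (dist_pos d Hmet x (xs n) (not_eq_sym IHn)). lra. }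
  assert (Hpos : forall n, 0 < d x (xs n) / 2).
  { intro n. pose proof (dist_pos d Hmet x (xs n) (not_eq_sym (Hne n))). lra. }
  exists xs. split; [|split].
  - intros [|n]; split; auto; simpl; fold xs; apply Hsel; auto; lra.
  - simpl. apply Hsel. lra.
  - intro n. simpl. fold xs. apply Hsel. auto.
Qed.

Section Construction.
Context {X : Type} (d : X -> X -> R) (Hmet : is_metric d) (h : X -> R) (M : R).
Context {K : Type} (lt : K -> K -> Prop) (Hwo : well_order lt) (Hcount : countable_type K).
Context (P : X -> Prop) (HPc : closed d P).

Notation PI := (iterate lt (deriv_in d (big h M)) P).

(* [x] lies in the successor stage after [gam n], hence is a limit of points of [PI (gam n)]
   where [|h| > M]. *)
Lemma pow_copy_points : forall a gam io x, pow_decomp lt a gam io -> PI a x ->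
  forall n r, 0 < r -> exists y, (PI (gam n) y /\ big h M y) /\ y <> x /\ d x y < r.
Proof.
  intros a gam io x HB Hx n r Hr.
  destruct (succ_exists lt Hwo a (gam n) (pd_lt HB n)) as [c [Hs Hca]].
  pose proof (proj2 (iterate_closed_antitone d Hmet lt Hwo (big h M) P HPc a) c x Hca Hx) as Hxc.
  apply (iterate_succ lt Hwo (deriv_in d (big h M)) P (gam n) c x Hs) in Hxc.
  destruct (Hxc r Hr) as [y [Hy [Hyx Hdy]]]. exists y. auto.
Qed.

Lemma pow_copy_exists : forall a x, PI a x -> forall eps, 0 < eps ->
  exists F phi, pow_copy d h M lt a x eps F phi.
Proof.
  intro a. induction (ltx_wf lt Hwo a) as [a _ IH]. intros x Hx eps Heps.
  destruct (classic (is_zero_ord lt a)) as [Hz|Hz].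
  { exists (fun u => u = x), (fun _ => omega_pow a). apply pow_copy_zero; auto. }
  destruct (pow_decomp_exists lt Hwo Hcount a Hz) as [gam [io HB]].
  destruct (halving_sequence d Hmet _ x eps Heps (pow_copy_points a gam io x HB Hx))
    as [xs [Hxs [Ht0 Htd]]].
  assert (HIH : forall n, exists FP : (X -> Prop) * (X -> omega_pow_interval K),
     pow_copy d h M lt (gam n) (xs n) (d x (xs n) / 10) (fst FP) (snd FP)).
  { intro n. destruct (Hxs n) as [[HPn _] Hne].
    pose proof (dist_pos d Hmet x (xs n) (not_eq_sym Hne)).
    destruct (IH (gam n) (pd_lt HB n) (xs n) HPn (d x (xs n) / 10) ltac:(lra)) as [F [phi G]].
    exists (F, phi). auto. }
  set (FP := fun n => proj1_sig (constructive_indefinite_description _ (HIH n))).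
  assert (HFP : forall n, pow_copy d h M lt (gam n) (xs n) (d x (xs n) / 10) (fst (FP n)) (snd (FP n))).
  { intro n. unfold FP. destruct (constructive_indefinite_description _ (HIH n)); auto. }
  exists (glue x (fun n => fst (FP n))), (glue_map a io (fun n => fst (FP n)) (fun n => snd (FP n))).
  apply (glue_pow_copy d Hmet h M lt Hwo a gam io HB x eps Heps xs); auto.
  - intro n. apply Hxs.
  - intro n. apply Hxs.
Qed.

End Construction.

Section Homeomorphism.
Context {K : Type} (lt : K -> K -> Prop) (Hwo : well_order lt).
Notation Opi := (omega_pow_interval K).
Notation olt := (olt lt).
Notation ole := (ole lt).

(* The successor is [f + omega^k0] with [k0] the least element of [K]. *)
Lemma opi_succ_exists : forall f : @CNFpos K, exists b, olt (Some f) b /\ forall z, olt z b -> ole z (Some f).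
Proof.
  intro f. destruct (ltx_min_exists lt Hwo (fun c => exists k, c = Some k)) as [m [[k0 ->] Hmin]].
  { destruct (cnfpos_nonzero f) as [k _]. exists (Some k); eauto. }
  assert (Hk0 : forall k, k <> k0 -> lt k0 k).
  { intros k Hk. destruct (Hmin (Some k) (ex_intro _ k eq_refl)) as [H|H]. exact H. inversion H; subst; tauto. }
  exists (Some (cnf_shift (uvec k0) (fin_supp_uvec k0) f)). split.
  - simpl. apply (cnf_lt_addr lt Hwo). apply cnfpos_fin_supp. apply fin_supp_uvec. exists k0. rewrite uvec_self; lia.
  - intros [g|] Hz; [|destruct Hz]. simpl in Hz. destruct Hz as [k [H1 H2]]. unfold cnf_add in *.
    destruct (classic (k = k0)) as [->|Ek].
    + rewrite uvec_self in H1. assert (Hab : forall j, j <> k0 -> proj1_sig g j = proj1_sig f j).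
      { intros j Hj. rewrite H2 by auto. rewrite uvec_other; auto; lia. }
      destruct (Nat.eq_dec (proj1_sig g k0) (proj1_sig f k0)) as [E|E].
      * right. apply some_cnfpos_eq. intro j. destruct (classic (j = k0)) as [->|Ej]; auto.
      * left. simpl. exists k0. split. lia. intros j Hj. apply Hab. intro; subst; eapply (wo_irrefl lt Hwo); eauto.
    + left. simpl. exists k. rewrite uvec_other in H1 by auto. split. lia.
      intros j Hj. rewrite H2 by auto. rewrite uvec_other. lia. intro; subst.
      apply (wo_irrefl lt Hwo k0). eapply (wo_trans lt Hwo); eauto.
Qed.


Lemma opi_isolated_above : forall p : Opi, exists hi : option Opi,
  (forall b, hi = Some b -> olt p b) /\ forall z, (forall b, hi = Some b -> olt z b) -> ole z p.
Proof.
  intros [f|].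
  - destruct (opi_succ_exists f) as [b [Hb1 Hb2]]. exists (Some b).
    split; [intros b' E; inversion E; subst; auto|]. intros z Hz. apply Hb2. apply Hz; auto.
  - exists None. split; [intros b E; discriminate|]. intros [z|] _; [left; simpl; auto|right; auto].
Qed.

Lemma max_below_list : forall (p : Opi) (l : list Opi), exists lo : option Opi,
  (forall a, lo = Some a -> olt a p) /\ forall q, In q l -> olt q p -> exists a, lo = Some a /\ ole q a.
Proof.
  intro p. induction l as [|q l [lo [H1 H2]]].
  - exists None. split; [intros a E; discriminate|intros q []].
  - destruct (classic (olt q p)) as [Lq|Lq].
    + assert (Hm : exists m, olt m p /\ ole q m /\ forall a, lo = Some a -> ole a m).
      { destruct lo as [a|]; [|exists q; split; auto; split; [right; auto|intros a E; discriminate]].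
        destruct (olt_trich lt Hwo a q) as [L|[L|L]].
        - exists q. split; auto. split; [right; auto|]. intros a' E; inversion E; subst. left; auto.
        - exists a. split; auto. split; [right; auto|]. intros a' E; inversion E; subst. right; auto.
        - exists a. split; auto. split; [left; auto|]. intros a' E; inversion E; subst. right; auto. }
      destruct Hm as [m [Hmp [Hqm Hlom]]].
      exists (Some m). split; [intros a E; inversion E; subst; auto|].
      intros q' [<-|Hq'] Lq'; exists m; split; auto.
      destruct (H2 q' Hq' Lq') as [a [Ea Ha]]. eapply (ole_trans lt Hwo); eauto.
    + exists lo. split; auto. intros q' [<-|Hq'] Lq'; [tauto|auto].
Qed.

Context {X : Type} (d : X -> X -> R) (Hmet : is_metric d).

(* Around
   [p] the compact [F] is covered by finitely many balls on which [V] holds, or [phi] stays at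
   most [phi c < p], or [phi] stays above [p]; the largest such [phi c] and the successor of [p]
   bound an order-interval around [p] inside the preimage of [V]. *)
Lemma order_open_inverse : forall (F : X -> Prop) (phi : X -> Opi) (psi : Opi -> X),
  compact_in d F -> (forall u, F u -> order_cont_at d lt phi F u) ->
  (forall u v, F u -> F v -> phi u = phi v -> u = v) ->
  (forall p, F (psi p)) -> (forall p, phi (psi p) = p) ->
  forall V : X -> Prop, (forall u, F u -> V u -> exists e, 0 < e /\ forall v, F v -> d u v < e -> V v) ->
  order_open (opi_lt lt) (fun p => V (psi p)).
Proof.
  intros F phi psi Hc Hct Hinj HF Hpp V HV p Hp.
  set (Pc := fun (c : X) (del : R) =>
     (V c /\ forall v, F v -> d c v < del -> V v) \/
     (olt (phi c) p /\ forall v, F v -> d c v < del -> ole (phi v) (phi c)) \/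
     (olt p (phi c) /\ forall v, F v -> d c v < del -> olt p (phi v))).
  assert (Hdel : forall c : {c | F c}, exists del, 0 < del /\ Pc (proj1_sig c) del).
  { intros [c Hcf]. simpl. destruct (classic (V c)) as [Vc|NVc].
    - destruct (HV c Hcf Vc) as [e [He He']]. exists e. split; auto. left; auto.
    - assert (Hne : phi c <> p).
      { intro E. apply NVc. rewrite (Hinj c (psi p)); auto. rewrite Hpp; auto. }
      destruct (olt_trich lt Hwo (phi c) p) as [L|[L|L]]; [| tauto |].
      + destruct (Hct c Hcf) as [_ [del [Hd Hd']]]. exists del. split; auto. right; left; auto.
      + destruct (Hct c Hcf) as [Hlo _]. destruct (Hlo p L) as [del [Hd Hd']].
        exists del. split; auto. right; right; auto. }
  set (df := fun c => proj1_sig (constructive_indefinite_description _ (Hdel c))).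
  assert (Hdf : forall c, 0 < df c /\ Pc (proj1_sig c) (df c)).
  { intro c. unfold df. destruct (constructive_indefinite_description _ (Hdel c)); auto. }
  destruct (Hc {c | F c} (fun i => ball d (proj1_sig i) (df i))) as [l Hl].
  { intro i. apply ball_open; auto. }
  { intros c Hcf. exists (exist _ c Hcf). unfold ball. simpl. rewrite (dist_self d Hmet). apply Hdf. }
  destruct (max_below_list p (map (fun i => phi (proj1_sig i)) l)) as [lo [Hlo1 Hlo2]].
  destruct (opi_isolated_above p) as [hi [Hhi1 Hhi2]].
  exists lo, hi. split; auto. split; auto.
  intros z Hzl Hzh. destruct (Hl (psi z) (HF z)) as [i [Hi Hu]]. unfold ball in Hu.
  pose proof (Hpp z) as Ez.
  destruct (Hdf i) as [_ [[Vc Hv]|[[Lc Hv]|[Lc Hv]]]].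
  - apply Hv; auto.
  - exfalso. destruct (Hlo2 _ (in_map (fun i => phi (proj1_sig i)) l i Hi) Lc) as [a [Ea Ha]].
    specialize (Hzl a Ea). pose proof (Hv (psi z) (HF z) Hu) as Hw. rewrite Ez in Hw.
    eapply (olt_irrefl lt z). eapply (ole_olt_trans lt Hwo); [|exact Hzl].
    eapply (ole_trans lt Hwo); eauto.
  - exfalso. pose proof (Hv (psi z) (HF z) Hu) as Hw. rewrite Ez in Hw.
    eapply (ole_not_olt lt Hwo); eauto.
Qed.

Lemma homeomorphic_of_order_cont : forall (F : X -> Prop) (phi : X -> Opi),
  compact_in d F -> (forall u, F u -> order_cont_at d lt phi F u) ->
  (forall u v, F u -> F v -> phi u = phi v -> u = v) -> (forall p, exists u, F u /\ phi u = p) ->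
  homeomorphic_to_omega_pow d lt F.
Proof.
  intros F phi Hc Hct Hinj Hon.
  set (psi0 := fun p => proj1_sig (constructive_indefinite_description _ (Hon p))).
  assert (Hpsi : forall p, F (psi0 p) /\ phi (psi0 p) = p).
  { intro p. unfold psi0. destruct (constructive_indefinite_description _ (Hon p)); auto. }
  exists (fun u => phi (proj1_sig u)), (fun p => exist _ (psi0 p) (proj1 (Hpsi p))).
  split; [|split; [|split]].
  - intros [u Hu]. apply (eq_sig_hprop (fun _ => proof_irrelevance _)). simpl.
    apply Hinj; auto; apply Hpsi.
  - intro p. apply Hpsi.
  - intros U HU [u Hu] HUu. simpl in HUu.
    destruct (HU (phi u) HUu) as [lo [hi [Hlo [Hhi HUz]]]].
    destruct (Hct u Hu) as [Clo [d2 [Hd2 Cup]]].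
    assert (Hd1 : exists d1, 0 < d1 /\
              forall v, F v -> d u v < d1 -> forall a, lo = Some a -> olt a (phi v)).
    { destruct lo as [a|].
      - destruct (Clo a (Hlo a eq_refl)) as [d1 [Hd1 C1]]. exists d1. split; auto.
        intros v Hv Hd a' E. inversion E; subst. auto.
      - exists 1. split. lra. intros v Hv Hd a' E; discriminate. }
    destruct Hd1 as [d1 [Hd1 C1]].
    exists (Rmin d1 d2). split. apply Rmin_pos; auto.
    intros [v Hv] Hd. simpl in Hd. pose proof (Rmin_l d1 d2). pose proof (Rmin_r d1 d2).
    apply HUz.
    + intros a E. apply (C1 v Hv ltac:(lra) a E).
    + intros b E. eapply (ole_olt_trans lt Hwo). apply (Cup v Hv ltac:(lra)). apply Hhi; auto.
  - intros V HV.
    set (V' := fun u => exists H : F u, V (exist _ u H)).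
    assert (Ho : order_open (opi_lt lt) (fun p => V' (psi0 p))).
    { apply (order_open_inverse F phi psi0 Hc Hct Hinj (fun p => proj1 (Hpsi p)) (fun p => proj2 (Hpsi p))).
      intros u Hu [Hu' HVu]. destruct (HV _ HVu) as [e [He He']].
      exists e. split; auto. intros v Hv Hd. exists Hv. apply (He' (exist _ v Hv)). auto. }
    intros p Hp. destruct (Ho p) as [lo [hi [H1 [H2 H3]]]].
    { exists (proj1 (Hpsi p)). exact Hp. }
    exists lo, hi. split; auto. split; auto. intros z Hz1 Hz2. destruct (H3 z Hz1 Hz2) as [Hz Vz].
    replace (proj1 (Hpsi z)) with Hz by apply proof_irrelevance. exact Vz.
Qed.

End Homeomorphism.

Theorem lemma4p13
  (X : Type) (d : X -> X -> R) (Hpolish : polish_with_metric d)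
  (h : X -> R) (M : R) (HM : 0 <= M)
  (K : Type) (lt : K -> K -> Prop) (Hwo : well_order lt) (Hcount : countable_type K)
  (P : X -> Prop) (HPclosed : open_in d (fun y => ~ P y))
  (x : X) (Hx : iterate lt (hM d h M) P None x) :
  forall eps, 0 < eps ->
  exists F : X -> Prop,
    compact_in d F /\
    (forall u, F u -> ball d x eps u) /\
    homeomorphic_to_omega_pow d lt F /\
    (forall u, F u -> u <> x -> M < Rabs (h u)) /\
    (forall y, iterate lt (hM d h M) F None y <-> y = x) /\
    (forall y, iterate lt (acc d) F None y <-> y = x).
Proof.
  intros eps Heps.
  assert (Hmet : is_metric d) by apply Hpolish.
  destruct (pow_copy_exists d Hmet h M lt Hwo Hcount P (closed_of_open d P HPclosed) None x Hx eps Heps)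
    as [F [phi G]].
  exists F. split; [|split; [|split; [|split; [|split]]]].
  - exact (pc_compact G).
  - exact (pc_ball G).
  - apply (homeomorphic_of_order_cont lt Hwo d Hmet F phi (pc_compact G) (pc_cont G) (pc_inj G)).
    intro p. exact (pc_onto G p I).
  - exact (pc_big G).
  - intro y. split; [apply (pc_iter_top G _ (fun _ Hu => Hu))|intros ->; apply (pc_iter_center G _ (fun _ Hu => Hu)); right; auto].
  - intro y. rewrite (iterate_ext lt (acc d) (deriv_in d (fun _ => True)) F).
    + split; [apply (pc_iter_top G _ (fun _ _ => I))|intros ->; apply (pc_iter_center G _ (fun _ _ => I)); right; auto].
    + intros S z. apply acc_ext. tauto.
Qed.
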